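(* Let $\mathcal L(k;s,t)=k+\sum_{n\ge0}u_{n+1}(s,t)k^{-n}$ and $\mathcal P(k;s,t)=p_0(s,t)k^N+\cdots+p_{N-1}(s,t)k+p_N(s,t)$ (a constant term $p_N$ allowed, $p_0\ne0$) satisfy the $N$-dcmKP equations. If $\varphi(s,t)$ satisfies $$\frac{\partial\varphi(s,t)}{\partial t_n}=-\mathcal B_n\Bigl(-\frac{\partial\varphi(s,t)}{\partial x};s,t\Bigr),\qquad n\ge1,$$ (where $\mathcal B_n(k;s,t)$ is evaluated at $k=-\partial\varphi/\partial x$), then $$\tilde{\mathcal L}(k;s,t):=\mathcal L\Bigl(k-\frac{\partial\varphi}{\partial x};s,t\Bigr)=e^{\mathrm{ad}\varphi}\mathcal L,\qquad \tilde{\mathcal P}(k;s,t):=e^{\partial\varphi/\partial s}\,\mathcal P\Bigl(k-\frac{\partial\varphi}{\partial x};s,t\Bigr)$$ also satisfy the $N$-dcmKP equations.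
   Context: Fix a positive integer $N$. Variables $s$ (continuous), $x$, $t=(t_1,t_2,\dots)$, where $x$ and $t_1$ appear only through $x+t_1$. Poisson bracket $\{f,g\}=\frac{\partial f}{\partial k}\frac{\partial g}{\partial x}-\frac{\partial f}{\partial x}\frac{\partial g}{\partial k}$; $(\mathrm{ad}f)g=\{f,g\}$. For a polynomial $\mathcal P=p_0k^N+\cdots+p_N$ with $p_0\ne0$, $\log\mathcal P:=\log p_0+N\log k+\log(1+\sum_{n=1}^N(p_n/p_0)k^{-n})$ expanded in $k^{-1}$. The $N$-dcmKP equations are, for $n\ge1$, $\partial_{t_n}\mathcal L=\{\mathcal B_n,\mathcal L\}$ with $\mathcal B_n:=(\mathcal L^n)_{>0}$ (projection onto positive powers of $k$), $\partial_s\mathcal L=\{\log\mathcal P,\mathcal L\}$, $\partial_{t_n}\log\mathcal P=\partial_s\mathcal B_n-\{\log\mathcal P,\mathcal B_n\}$. *)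

From Stdlib Require Import Reals ZArith List Bool.
From Coquelicot Require Import Coquelicot.
Import ListNotations.
Open Scope R_scope.

(** A coefficient is a real function of (s, tau) where tau : nat -> R and
    tau i is the coordinate t_(i+1); since x and t_1 only occur through
    x + t_1, the coordinate tau 0 stands for x + t_1. *)
Definition CF := R -> (nat -> R) -> R.

Definition fzero : CF := fun _ _ => 0.
Definition fone : CF := fun _ _ => 1.
Definition fconst (c : R) : CF := fun _ _ => c.
Definition fadd (f g : CF) : CF := fun s t => f s t + g s t.
Definition fmul (f g : CF) : CF := fun s t => f s t * g s t.
Definition fopp (f : CF) : CF := fun s t => - f s t.
Definition fscal (c : R) (f : CF) : CF := fun s t => c * f s t.
Definition fdiv (f g : CF) : CF := fun s t => f s t / g s t.
Definition fpow (f : CF) (m : nat) : CF := fun s t => (f s t) ^ m.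

Definition upd (t : nat -> R) (i : nat) (y : R) : nat -> R :=
  fun j => if Nat.eqb j i then y else t j.

Inductive dir := Ds | Dc (i : nat).

Definition apply_dir (d : dir) (y : R) (f : CF) (s : R) (t : nat -> R) : R :=
  match d with Ds => f y t | Dc i => f s (upd t i y) end.
Definition coord (d : dir) (s : R) (t : nat -> R) : R :=
  match d with Ds => s | Dc i => t i end.

Definition dderiv (d : dir) (f : CF) : CF :=
  fun s t => Derive (fun y => apply_dir d y f s t) (coord d s t).

Definition ds : CF -> CF := dderiv Ds.
Definition dt (n : nat) : CF -> CF := dderiv (Dc (Nat.pred n)).
Definition dx : CF -> CF := dt 1.

Definition iterd (l : list dir) (f : CF) : CF := fold_right dderiv f l.

Definition slice2 (d1 d2 : dir) (g : CF) (s : R) (t : nat -> R) : R * R -> R :=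
  fun p => apply_dir d2 (snd p) (fun s' t' => apply_dir d1 (fst p) g s' t') s t.

Definition smooth (f : CF) : Prop :=
  forall l : list dir,
    (forall d s t, ex_derive (fun y => apply_dir d y (iterd l f) s t) (coord d s t)) /\
    (forall d1 d2 s t,
        continuous (slice2 d1 d2 (iterd l f) s t) (coord d1 s t, coord d2 s t)).

(** * Formal Laurent series in k^{-1}:  sum_{j <= ldeg} lco j k^j. *)
Record LS := mkLS { ldeg : Z; lco : Z -> CF }.

Definition coef (f : LS) (j : Z) : CF :=
  if (j <=? ldeg f)%Z then lco f j else fzero.

Definition LSeq (f g : LS) : Prop :=
  forall j s t, coef f j s t = coef g j s t.

Definition sumZ (a b : Z) (F : Z -> CF) : CF :=
  fun s t => fold_right Rplus 0
     (map (fun i : nat => F (a + Z.of_nat i)%Z s t) (seq 0 (Z.to_nat (b - a + 1)))).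
Definition sumN (a b : nat) (F : nat -> CF) : CF :=
  fun s t => fold_right Rplus 0 (map (fun i : nat => F i s t) (seq a (S b - a))).

Definition lconst (c : CF) : LS := mkLS 0 (fun j => if (j =? 0)%Z then c else fzero).
Definition lmono (d : Z) (c : CF) : LS := mkLS d (fun j => if (j =? d)%Z then c else fzero).
Definition lone : LS := lconst fone.
Definition ladd (f g : LS) : LS :=
  mkLS (Z.max (ldeg f) (ldeg g)) (fun j => fadd (coef f j) (coef g j)).
Definition lopp (f : LS) : LS := mkLS (ldeg f) (fun j => fopp (coef f j)).
Definition lsub (f g : LS) : LS := ladd f (lopp g).
Definition lmul (f g : LS) : LS :=
  mkLS (ldeg f + ldeg g)
    (fun j => sumZ (j - ldeg g) (ldeg f) (fun i => fmul (coef f i) (coef g (j - i)))).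
Fixpoint lpow (f : LS) (n : nat) : LS :=
  match n with O => lone | S m => lmul (lpow f m) f end.
Definition lpos (f : LS) : LS :=
  mkLS (ldeg f) (fun j => if (0 <? j)%Z then coef f j else fzero).
Definition ldk (f : LS) : LS :=
  mkLS (ldeg f - 1) (fun j => fscal (IZR (j + 1)) (coef f (j + 1))).
Definition lmap (D : CF -> CF) (f : LS) : LS := mkLS (ldeg f) (fun j => D (coef f j)).

Definition bracket (f g : LS) : LS :=
  lsub (lmul (ldk f) (lmap dx g)) (lmul (lmap dx f) (ldk g)).

Definition gbinom (j : Z) (m : nat) : R :=
  fold_right Rmult 1 (map (fun l => IZR j - INR l) (seq 0 m)) / INR (fact m).

(** substitution k |-> k - a, expanded in k^{-1}:
    (k - a)^j = sum_m C(j,m) (-a)^m k^{j-m} *)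
Definition lsubst (f : LS) (a : CF) : LS :=
  mkLS (ldeg f) (fun i => sumZ i (ldeg f) (fun j =>
     fmul (fscal (gbinom j (Z.to_nat (j - i))) (fpow (fopp a) (Z.to_nat (j - i))))
          (coef f j))).

Definition peval (f : LS) (a : CF) : CF :=
  sumZ 0 (ldeg f) (fun j => fmul (coef f j) (fpow a (Z.to_nat j))).

Definition Lax (u : nat -> CF) : LS :=
  mkLS 1 (fun j => if (j =? 1)%Z then fone else u (Z.to_nat (1 - j))).

Definition polyLS (N : nat) (p : nat -> CF) : LS :=
  mkLS (Z.of_nat N) (fun j => if (0 <=? j)%Z then p (Z.to_nat (Z.of_nat N - j)) else fzero).

Definition Bn (L : LS) (n : nat) : LS := lpos (lpow L n).

(** * log P = log p_0 + N log k + log(1 + q),  q = sum_{n=1}^N (p_n/p_0) k^{-n},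
    log(1+q) = sum_{m>=1} (-1)^(m+1) q^m / m  (q^m has degree <= -m, so the
    coefficient of k^j only involves m <= -j). *)
Definition qser (N : nat) (p : nat -> CF) : LS :=
  mkLS (-1) (fun j => if andb (j <? 0)%Z (- j <=? Z.of_nat N)%Z
                      then fdiv (p (Z.to_nat (- j))) (p 0%nat) else fzero).
Definition log1q (N : nat) (p : nat -> CF) : LS :=
  mkLS (-1) (fun j => sumN 1 (Z.to_nat (- j)) (fun m =>
     fscal ((-1) ^ (S m) / INR m) (coef (lpow (qser N p) m) j))).
(** the scalar part log p_0 (taken as ln|p_0|; it only enters through its
    derivatives, which agree with those of any branch of log p_0) *)
Definition logp0 (p : nat -> CF) : CF := fun s t => ln (Rabs (p 0%nat s t)).

Definition logD (N : nat) (p : nat -> CF) (D : CF -> CF) : LS :=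
  ladd (lconst (D (logp0 p))) (lmap D (log1q N p)).
Definition logDk (N : nat) (p : nat -> CF) : LS :=
  ladd (lmono (-1) (fconst (INR N))) (ldk (log1q N p)).
Definition bracket_log (N : nat) (p : nat -> CF) (g : LS) : LS :=
  lsub (lmul (logDk N p) (lmap dx g)) (lmul (logD N p dx) (ldk g)).

Definition dcmKP (N : nat) (L : LS) (p : nat -> CF) : Prop :=
  (forall s t, p 0%nat s t <> 0) /\
  (forall n, (1 <= n)%nat ->
      LSeq (lmap (dt n) L) (bracket (Bn L n) L) /\
      LSeq (logD N p (dt n)) (lsub (lmap ds (Bn L n)) (bracket_log N p (Bn L n)))) /\
  LSeq (lmap ds L) (bracket_log N p L).

Definition adphi (phi : CF) (f : LS) : LS := bracket (lconst phi) f.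
Fixpoint adpow (phi : CF) (m : nat) (f : LS) : LS :=
  match m with O => f | S m' => adphi phi (adpow phi m' f) end.
Definition is_expad (phi : CF) (f g : LS) : Prop :=
  forall j s t, exists M : nat, forall M', (M <= M')%nat ->
    fold_right Rplus 0 (map (fun m => coef (adpow phi m f) j s t / INR (fact m)) (seq 0 M'))
    = coef g j s t.

(** P~ = e^{phi_s} P(k - phi_x), its coefficients p~_i (coefficient of k^{N-i}) *)
Definition ptilde (N : nat) (p : nat -> CF) (phi : CF) : nat -> CF :=
  fun i => fmul (fun s t => exp (ds phi s t))
                (coef (lsubst (polyLS N p) (dx phi)) (Z.of_nat N - Z.of_nat i)).

From Stdlib Require Import Reals ZArith List Lia Lra FunctionalExtensionality Setoid Morphisms Ring.
From Coquelicot Require Import Coquelicot.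
Import ListNotations.
Open Scope R_scope.

(* The substitution [k |-> k - a] is a ring endomorphism of Laurent series in
   [k^-1] which commutes with [d/dk] and obeys the chain rule
   [D (f (k - a)) = (D f)(k - a) - (D a) (df/dk)(k - a)] for every derivation
   [D] in [s, t]; with [a = phi_x] the extra terms cancel in the Poisson
   bracket, so [{f (k - a), g (k - a)} = {f, g}(k - a)].  Since
   [(ad phi)^m L = (- phi_x)^m (d/dk)^m L], [e^(ad phi) L] is the Taylor
   expansion of [L (k - phi_x)].  Projecting onto positive powers commutes
   with the substitution up to the constant [B_n (- phi_x) = - phi_(t_n)].
   For the logarithm, [D log P] is characterised by [P * D log P = D P]
   (multiplication by [P] can be cancelled since its leading coefficient
   never vanishes), and [P~ = e^(phi_s) P (k - phi_x)] then gives
   [D log P~ = D phi_s + (D log P)(k - phi_x) - (D phi_x)(d/dk log P)(k - phi_x)].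
   Substituted into the equations, all extra terms cancel by the symmetry of
   the mixed partial derivatives of [phi]. *)

Definition zsum (a b : Z) (F : Z -> R) : R :=
  fold_right Rplus 0 (map (fun i : nat => F (a + Z.of_nat i)%Z) (seq 0 (Z.to_nat (b - a + 1)))).

Lemma sumZ_zsum a b F s t : sumZ a b F s t = zsum a b (fun i => F i s t).
Proof. reflexivity. Qed.

Lemma fold_Rplus_app l1 l2 :
  fold_right Rplus 0 (l1 ++ l2) = fold_right Rplus 0 l1 + fold_right Rplus 0 l2.
Proof. induction l1; simpl; [lra | rewrite IHl1; lra]. Qed.

Lemma zsum_nil a b F : (b < a)%Z -> zsum a b F = 0.
Proof. intros H. unfold zsum. replace (Z.to_nat (b - a + 1)) with 0%nat by lia. reflexivity. Qed.

Lemma zsum_first a b F : (a <= b)%Z -> zsum a b F = F a + zsum (a + 1) b F.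
Proof.
  intros H. unfold zsum.
  replace (Z.to_nat (b - a + 1)) with (S (Z.to_nat (b - (a + 1) + 1))) by lia.
  simpl. rewrite Z.add_0_r. f_equal.
  rewrite <- seq_shift, map_map. f_equal. apply map_ext. intros i. f_equal. lia.
Qed.

Lemma zsum_last a b F : (a <= b)%Z -> zsum a b F = zsum a (b - 1) F + F b.
Proof.
  intros H. unfold zsum.
  replace (Z.to_nat (b - a + 1)) with (S (Z.to_nat (b - 1 - a + 1))) by lia.
  rewrite seq_S, map_app, fold_Rplus_app. simpl. rewrite Rplus_0_r. do 2 f_equal. lia.
Qed.

Lemma zsum_single a F : zsum a a F = F a.
Proof. rewrite zsum_first, zsum_nil by lia. lra. Qed.

Lemma zsum_ind (P : Z -> Z -> Prop) :
  (forall a b, (b < a)%Z -> P a b) ->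
  (forall a b, (a <= b)%Z -> P (a + 1)%Z b -> P a b) ->
  forall a b, P a b.
Proof.
  intros Hnil Hfirst.
  assert (H : forall n a b, Z.to_nat (b - a + 1) = n -> P a b).
  { induction n; intros a b Hn; [apply Hnil; lia | apply Hfirst; [lia | apply IHn; lia]]. }
  intros a b. eapply H; reflexivity.
Qed.

Lemma zsum_ext a b F G :
  (forall i, (a <= i <= b)%Z -> F i = G i) -> zsum a b F = zsum a b G.
Proof.
  revert a b.
  apply (zsum_ind (fun a b => (forall i, (a <= i <= b)%Z -> F i = G i) -> zsum a b F = zsum a b G)).
  - intros a b H _. rewrite !zsum_nil by lia. reflexivity.
  - intros a b Hab IH H. rewrite !(zsum_first a b), H, IH by (try intros; try apply H; lia).
    reflexivity.
Qed.

Lemma zsum_plus a b F G : zsum a b (fun i => F i + G i) = zsum a b F + zsum a b G.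
Proof.
  revert a b. apply zsum_ind.
  - intros a b H. rewrite !zsum_nil by lia. lra.
  - intros a b Hab IH. rewrite !(zsum_first a b), IH by lia. lra.
Qed.

Lemma zsum_scal a b c F : zsum a b (fun i => c * F i) = c * zsum a b F.
Proof.
  revert a b. apply zsum_ind.
  - intros a b H. rewrite !zsum_nil by lia. lra.
  - intros a b Hab IH. rewrite !(zsum_first a b), IH by lia. lra.
Qed.

Lemma zsum_scal_r a b c F : zsum a b (fun i => F i * c) = zsum a b F * c.
Proof. rewrite Rmult_comm, <- zsum_scal. apply zsum_ext. intros; lra. Qed.

Lemma zsum_opp a b F : zsum a b (fun i => - F i) = - zsum a b F.
Proof.
  replace (- zsum a b F) with ((-1) * zsum a b F) by lra.
  rewrite <- zsum_scal. apply zsum_ext; intros; lra.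
Qed.

Lemma zsum_zero a b F : (forall i, (a <= i <= b)%Z -> F i = 0) -> zsum a b F = 0.
Proof.
  revert a b.
  apply (zsum_ind (fun a b => (forall i, (a <= i <= b)%Z -> F i = 0) -> zsum a b F = 0)).
  - intros a b H _. apply zsum_nil; lia.
  - intros a b Hab IH H. rewrite zsum_first, H, IH by (try intros; try apply H; lia). lra.
Qed.

Lemma zsum_split a m b F :
  (a <= m <= b + 1)%Z -> zsum a b F = zsum a (m - 1) F + zsum m b F.
Proof.
  intros H. remember (Z.to_nat (m - a)) as n. revert a H Heqn.
  induction n; intros a H Hn.
  - replace m with a by lia. rewrite (zsum_nil a (a - 1)) by lia. lra.
  - rewrite (zsum_first a b), (zsum_first a (m - 1)) by lia.
    rewrite (IHn (a + 1)%Z) by lia. lra.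
Qed.

Lemma zsum_restrict a b lo hi F :
  (forall i, (i < lo \/ hi < i)%Z -> F i = 0) -> (a <= lo)%Z -> (hi <= b)%Z -> (lo <= hi + 1)%Z ->
  zsum a b F = zsum lo hi F.
Proof.
  intros H H1 H2 H3.
  rewrite (zsum_split a lo b), (zsum_split lo (hi + 1) b) by lia.
  rewrite (zsum_zero a (lo - 1)), (zsum_zero (hi + 1) b) by (intros; apply H; lia).
  replace (hi + 1 - 1)%Z with hi by lia. lra.
Qed.

Lemma zsum_supp_eq a1 b1 a2 b2 lo hi F :
  (forall i, (i < lo \/ hi < i)%Z -> F i = 0) ->
  (a1 <= lo)%Z -> (hi <= b1)%Z -> (a2 <= lo)%Z -> (hi <= b2)%Z ->
  zsum a1 b1 F = zsum a2 b2 F.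
Proof.
  intros H H1 H2 H3 H4. destruct (Z_le_gt_dec lo (hi + 1)).
  - rewrite (zsum_restrict a1 b1 lo hi), (zsum_restrict a2 b2 lo hi); auto.
  - rewrite !zsum_zero; auto; intros i Hi; apply H; lia.
Qed.

Lemma zsum_trunc_hi a b b' F :
  (b <= b')%Z -> (forall i, (b < i <= b')%Z -> F i = 0) -> zsum a b' F = zsum a b F.
Proof.
  intros H1 H2. destruct (Z_le_gt_dec a (b + 1)).
  - rewrite (zsum_split a (b + 1) b'), (zsum_zero (b + 1) b') by (try intros; try apply H2; lia).
    replace (b + 1 - 1)%Z with b by lia. lra.
  - rewrite (zsum_nil a b) by lia. apply zsum_zero. intros; apply H2; lia.
Qed.

Lemma zsum_delta a b k F :
  (a <= k <= b)%Z -> (forall i, i <> k -> F i = 0) -> zsum a b F = F k.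
Proof.
  intros H1 H2. rewrite (zsum_restrict a b k k) by (try intros; try apply H2; lia).
  apply zsum_single.
Qed.

Lemma zsum_shift a b c F : zsum a b (fun i => F (i + c)%Z) = zsum (a + c) (b + c) F.
Proof.
  unfold zsum. replace (b + c - (a + c) + 1)%Z with (b - a + 1)%Z by lia.
  apply f_equal, map_ext. intros i. f_equal. lia.
Qed.

Lemma zsum_shift_r a b c F : zsum a b F = zsum (a + c) (b + c) (fun i => F (i - c)%Z).
Proof. rewrite <- zsum_shift. apply zsum_ext. intros; f_equal; lia. Qed.

Lemma zsum_rev a b F : zsum a b (fun i => F (- i)%Z) = zsum (- b) (- a) F.
Proof.
  revert a b. apply zsum_ind.
  - intros a b H. rewrite !zsum_nil by lia. reflexivity.
  - intros a b Hab IH. rewrite (zsum_first a b), IH, (zsum_last (- b) (- a)) by lia.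
    replace (- (a + 1))%Z with (- a - 1)%Z by lia. lra.
Qed.

Lemma zsum_reflect a b j F : zsum a b (fun i => F (j - i)%Z) = zsum (j - b) (j - a) F.
Proof.
  transitivity (zsum a b (fun i => (fun x => F (x + j)%Z) (- i)%Z)).
  - apply zsum_ext; intros; f_equal; lia.
  - rewrite (zsum_rev a b (fun x => F (x + j)%Z)), zsum_shift. f_equal; lia.
Qed.

Lemma zsum_swap a b c d G :
  zsum a b (fun i => zsum c d (fun l => G i l)) = zsum c d (fun l => zsum a b (fun i => G i l)).
Proof.
  revert a b. apply zsum_ind.
  - intros a b H. rewrite zsum_nil by lia. symmetry. apply zsum_zero. intros. apply zsum_nil. lia.
  - intros a b Hab IH. rewrite (zsum_first a b), IH, <- zsum_plus by lia.
    apply zsum_ext. intros. rewrite (zsum_first a b) by lia. reflexivity.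
Qed.

Lemma zsum_indicator_lo a b l F : (a <= l <= b + 1)%Z ->
  zsum a b (fun j => if (l <=? j)%Z then F j else 0) = zsum l b F.
Proof.
  intros H. rewrite (zsum_split a l b) by lia.
  rewrite zsum_zero by (intros j Hj; replace (l <=? j)%Z with false by (symmetry; apply Z.leb_gt; lia); reflexivity).
  rewrite Rplus_0_l. apply zsum_ext. intros j Hj.
  replace (l <=? j)%Z with true by (symmetry; apply Z.leb_le; lia). reflexivity.
Qed.

Definition nsum (n : nat) (F : nat -> R) : R := fold_right Rplus 0 (map F (seq 0 n)).

Lemma zsum0_nsum m G : zsum 0 (Z.of_nat m) G = nsum (S m) (fun r => G (Z.of_nat r)).
Proof. unfold zsum, nsum. replace (Z.to_nat (Z.of_nat m - 0 + 1)) with (S m) by lia. reflexivity. Qed.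

Lemma nsum_S_r n F : nsum (S n) F = nsum n F + F n.
Proof. unfold nsum. rewrite seq_S, map_app, fold_Rplus_app. simpl. lra. Qed.

Lemma nsum_S_l n F : nsum (S n) F = F 0%nat + nsum n (fun i => F (S i)).
Proof. unfold nsum. simpl. rewrite <- seq_shift, map_map. reflexivity. Qed.

Lemma nsum_ext n F G : (forall i, (i < n)%nat -> F i = G i) -> nsum n F = nsum n G.
Proof.
  induction n; intros H; [reflexivity |].
  rewrite !nsum_S_r, IHn, (H n) by (try intros; try apply H; lia). reflexivity.
Qed.

Lemma nsum_plus n F G : nsum n (fun i => F i + G i) = nsum n F + nsum n G.
Proof. induction n; [unfold nsum; simpl; lra | rewrite !nsum_S_r, IHn; lra]. Qed.

Lemma nsum_scal n c F : nsum n (fun i => c * F i) = c * nsum n F.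
Proof. induction n; [unfold nsum; simpl; lra | rewrite !nsum_S_r, IHn; lra]. Qed.

Lemma nsum_trunc K M G : (forall m, (K <= m)%nat -> G m = 0) -> (K <= M)%nat -> nsum M G = nsum K G.
Proof. intros H HM. induction HM; [reflexivity | rewrite nsum_S_r, IHHM, H by lia; ring]. Qed.

Definition falling (x : R) (m : nat) : R := fold_right Rmult 1 (map (fun l => x - INR l) (seq 0 m)).
(* [gbinom j m] unfolds to [binomR (IZR j) m]. *)
Definition binomR (x : R) (m : nat) : R := falling x m / INR (fact m).

Lemma fold_Rmult_app l1 l2 :
  fold_right Rmult 1 (l1 ++ l2) = fold_right Rmult 1 l1 * fold_right Rmult 1 l2.
Proof. induction l1; simpl; [lra|rewrite IHl1; lra]. Qed.

Lemma falling_0 x : falling x 0 = 1. Proof. reflexivity. Qed.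

Lemma falling_S_r x m : falling x (S m) = falling x m * (x - INR m).
Proof. unfold falling. rewrite seq_S, map_app, fold_Rmult_app. simpl. lra. Qed.

Lemma falling_S_l x m : falling x (S m) = x * falling (x - 1) m.
Proof.
  unfold falling. simpl. rewrite <- seq_shift, map_map. f_equal. lra.
  f_equal. apply map_ext. intros l. rewrite S_INR. lra.
Qed.

Lemma falling_nat_lt j m : (0 <= j)%Z -> (j < Z.of_nat m)%Z -> falling (IZR j) m = 0.
Proof.
  induction m; intros H1 H2; [lia|].
  rewrite falling_S_r. destruct (Z.eq_dec j (Z.of_nat m)).
  - subst. rewrite <- INR_IZR_INZ. lra.
  - rewrite IHm by lia. lra.
Qed.

Lemma falling_diag m : falling (INR m) m = INR (fact m).
Proof.
  induction m. reflexivity.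
  rewrite falling_S_l. replace (INR (S m) - 1) with (INR m) by (rewrite S_INR; lra).
  rewrite IHm. rewrite fact_simpl, mult_INR. reflexivity.
Qed.

Lemma binomR_0 x : binomR x 0 = 1. Proof. unfold binomR. rewrite falling_0. simpl. field. Qed.

Lemma binomR_diag m : binomR (INR m) m = 1.
Proof. unfold binomR. rewrite falling_diag. field. apply INR_fact_neq_0. Qed.

Lemma binomR_S_r x m : binomR x (S m) * INR (S m) = binomR x m * (x - INR m).
Proof.
  unfold binomR. rewrite falling_S_r. rewrite fact_simpl, mult_INR.
  field. split; [apply INR_fact_neq_0|]. apply not_0_INR. lia.
Qed.

Lemma binomR_S_l x m : binomR x (S m) * INR (S m) = x * binomR (x - 1) m.
Proof.
  unfold binomR. rewrite falling_S_l. rewrite fact_simpl, mult_INR.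
  field. split; [apply INR_fact_neq_0|]. apply not_0_INR. lia.
Qed.

Lemma binomR_absorb x m : binomR x m * (x - INR m) = x * binomR (x - 1) m.
Proof. rewrite <- binomR_S_r, binomR_S_l. reflexivity. Qed.

Lemma binomR_nat_lt j m : (0 <= j)%Z -> (j < Z.of_nat m)%Z -> binomR (IZR j) m = 0.
Proof. intros. unfold binomR. rewrite falling_nat_lt by auto. lra. Qed.
Lemma binomR_vandermonde m : forall x y,
  nsum (S m) (fun r => binomR x r * binomR y (m - r)) = binomR (x + y) m.
Proof.
  induction m; intros x y.
  - unfold nsum. simpl. rewrite !binomR_0. lra.
  - apply (Rmult_eq_reg_r (INR (S m))); [|apply not_0_INR; lia].
    rewrite binomR_S_r, <- IHm.
    transitivity (nsum (S (S m)) (fun r => INR r * (binomR x r * binomR y (S m - r)))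
                + nsum (S (S m)) (fun r => INR (S m - r) * (binomR x r * binomR y (S m - r)))).
    { rewrite <- nsum_plus. rewrite Rmult_comm, <- nsum_scal. apply nsum_ext.
      intros i Hi. rewrite minus_INR by lia. lra. }
    rewrite (nsum_S_l (S m) (fun r => INR r * _)).
    rewrite (nsum_S_r (S m) (fun r => INR (S m - r) * _)).
    replace (S m - S m)%nat with 0%nat by lia.
    simpl (INR 0).
    rewrite !Rmult_0_l, Rplus_0_l, Rplus_0_r, <- nsum_plus, Rmult_comm, <- nsum_scal.
    apply nsum_ext. intros r Hr.
    replace (S m - S r)%nat with (m - r)%nat by lia.
    replace (S m - r)%nat with (S (m - r))%nat by lia.
    replace (INR (S r) * (binomR x (S r) * binomR y (m - r))) with ((binomR x (S r) * INR (S r)) * binomR y (m - r)) by ring.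
    replace (INR (S (m - r)) * (binomR x r * binomR y (S (m - r)))) with (binomR x r * (binomR y (S (m - r)) * INR (S (m - r)))) by ring.
    rewrite !binomR_S_r. rewrite minus_INR by lia. ring.
Qed.

Lemma binomR_vandermondeZ j1 j2 i : (i <= j1 + j2)%Z ->
  zsum (i - j2) j1 (fun l => binomR (IZR j1) (Z.to_nat (j1 - l)) * binomR (IZR j2) (Z.to_nat (j2 - (i - l))))
  = binomR (IZR (j1 + j2)) (Z.to_nat (j1 + j2 - i)).
Proof.
  intros H. set (m := Z.to_nat (j1 + j2 - i)).
  set (F := fun l => binomR (IZR j1) (Z.to_nat (j1 - l)) * binomR (IZR j2) (Z.to_nat (j2 - (i - l)))).
  transitivity (zsum 0 (Z.of_nat m) (fun r => F (j1 - r)%Z)).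
  - etransitivity; [|symmetry; apply (zsum_reflect 0 (Z.of_nat m) j1 F)]. f_equal; subst m; lia.
  - rewrite zsum0_nsum, plus_IZR, <- binomR_vandermonde. apply nsum_ext. intros r Hr.
    unfold F. f_equal; f_equal; lia.
Qed.

Lemma coef_above f j s t : (ldeg f < j)%Z -> coef f j s t = 0.
Proof. intros H. unfold coef. replace (j <=? ldeg f)%Z with false by (symmetry; apply Z.leb_gt; lia). reflexivity. Qed.

Lemma coef_below f j : (j <= ldeg f)%Z -> coef f j = lco f j.
Proof. intros H. unfold coef. replace (j <=? ldeg f)%Z with true by (symmetry; apply Z.leb_le; lia). reflexivity. Qed.

Lemma coef_ladd f g j s t : coef (ladd f g) j s t = coef f j s t + coef g j s t.
Proof.
  destruct (Z_le_gt_dec j (Z.max (ldeg f) (ldeg g))).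
  - rewrite coef_below by (simpl; lia). reflexivity.
  - rewrite !coef_above by (simpl; lia). lra.
Qed.

Lemma coef_lopp f j s t : coef (lopp f) j s t = - coef f j s t.
Proof.
  destruct (Z_le_gt_dec j (ldeg f)).
  - rewrite coef_below by (simpl; lia). reflexivity.
  - rewrite !coef_above by (simpl; lia). lra.
Qed.

Lemma coef_lsub f g j s t : coef (lsub f g) j s t = coef f j s t - coef g j s t.
Proof. unfold lsub. rewrite coef_ladd, coef_lopp. lra. Qed.

Lemma coef_lmul f g j s t lo hi : (lo <= j - ldeg g)%Z -> (ldeg f <= hi)%Z ->
  coef (lmul f g) j s t = zsum lo hi (fun i => coef f i s t * coef g (j - i) s t).
Proof.
  intros H1 H2.
  destruct (Z_le_gt_dec j (ldeg f + ldeg g)).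
  - rewrite coef_below by (simpl; lia). simpl. rewrite sumZ_zsum.
    apply (zsum_supp_eq _ _ _ _ (j - ldeg g) (ldeg f)); try lia.
    intros i [Hi|Hi]; unfold fmul.
    + rewrite (coef_above g) by lia. lra.
    + rewrite (coef_above f) by lia. lra.
  - rewrite coef_above by (simpl; lia). symmetry. apply zsum_zero. intros i Hi.
    destruct (Z_le_gt_dec i (ldeg f)).
    + rewrite (coef_above g) by lia. lra.
    + rewrite (coef_above f) by lia. lra.
Qed.

Lemma coef_lconst c j s t : coef (lconst c) j s t = if (j =? 0)%Z then c s t else 0.
Proof.
  destruct (Z_le_gt_dec j 0).
  - rewrite coef_below by (simpl; lia). simpl. destruct (j =? 0)%Z; reflexivity.
  - rewrite coef_above by (simpl; lia). replace (j =? 0)%Z with false by (symmetry; apply Z.eqb_neq; lia). reflexivity.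
Qed.

Lemma coef_lmono d c j s t : coef (lmono d c) j s t = if (j =? d)%Z then c s t else 0.
Proof.
  destruct (Z_le_gt_dec j d).
  - rewrite coef_below by (simpl; lia). simpl. destruct (j =? d)%Z; reflexivity.
  - rewrite coef_above by (simpl; lia). replace (j =? d)%Z with false by (symmetry; apply Z.eqb_neq; lia). reflexivity.
Qed.

Lemma coef_ldk f j s t : coef (ldk f) j s t = IZR (j + 1) * coef f (j+1) s t.
Proof.
  destruct (Z_le_gt_dec j (ldeg f - 1)).
  - rewrite coef_below by (simpl; lia). reflexivity.
  - rewrite !coef_above by (simpl; lia). lra.
Qed.

Lemma coef_lpos f j s t : coef (lpos f) j s t = if (0 <? j)%Z then coef f j s t else 0.
Proof.
  destruct (Z_le_gt_dec j (ldeg f)).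
  - rewrite coef_below by (simpl; lia). simpl. destruct (0 <? j)%Z; reflexivity.
  - rewrite !coef_above by (simpl; lia). destruct (0 <? j)%Z; reflexivity.
Qed.

Lemma coef_lmap D f j s t : D fzero s t = 0 -> coef (lmap D f) j s t = D (coef f j) s t.
Proof.
  intros HD. destruct (Z_le_gt_dec j (ldeg f)).
  - rewrite coef_below by (simpl; lia). simpl. rewrite coef_below by lia. reflexivity.
  - rewrite coef_above by (simpl; lia). unfold coef. replace (j <=? ldeg f)%Z with false by (symmetry; apply Z.leb_gt; lia). auto.
Qed.

Lemma dderiv_zero d s t : dderiv d fzero s t = 0.
Proof. unfold dderiv, fzero. destruct d; simpl; apply Derive_const. Qed.

Lemma coef_lmapd d f j s t : coef (lmap (dderiv d) f) j s t = dderiv d (coef f j) s t.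
Proof. apply coef_lmap, dderiv_zero. Qed.

Lemma coef_lsubst f a i s t hi : (ldeg f <= hi)%Z ->
  coef (lsubst f a) i s t =
  zsum i hi (fun j => binomR (IZR j) (Z.to_nat (j - i)) * (- a s t) ^ (Z.to_nat (j - i)) * coef f j s t).
Proof.
  intros H. destruct (Z_le_gt_dec i (ldeg f)).
  - rewrite coef_below by (simpl; lia). simpl. rewrite sumZ_zsum.
    symmetry. apply zsum_trunc_hi; auto. intros j Hj. cbv beta. unfold fmul. rewrite coef_above by lia. lra.
  - rewrite coef_above by (simpl; lia). symmetry. apply zsum_zero. intros j Hj.
    rewrite coef_above by lia. lra.
Qed.

Lemma ldeg_lpow f n : ldeg (lpow f n) = (Z.of_nat n * ldeg f)%Z.
Proof. induction n; simpl lpow; [reflexivity|]. simpl ldeg. rewrite IHn. lia. Qed.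

Lemma LSeq_refl f : LSeq f f. Proof. intros j s t; reflexivity. Qed.
Lemma LSeq_sym f g : LSeq f g -> LSeq g f. Proof. intros H j s t; auto. Qed.
Lemma LSeq_trans f g h : LSeq f g -> LSeq g h -> LSeq f h. Proof. intros H1 H2 j s t; rewrite H1; auto. Qed.

Add Parametric Relation : LS LSeq
  reflexivity proved by LSeq_refl symmetry proved by LSeq_sym transitivity proved by LSeq_trans as LSeq_rel.

Add Parametric Morphism : coef with signature LSeq ==> eq ==> eq ==> eq ==> eq as coef_mor.
Proof. intros f g H j s t. apply H. Qed.

Add Parametric Morphism : ladd with signature LSeq ==> LSeq ==> LSeq as ladd_mor.
Proof. intros f f' Hf g g' Hg j s t. rewrite !coef_ladd, Hf, Hg. reflexivity. Qed.

Add Parametric Morphism : lopp with signature LSeq ==> LSeq as lopp_mor.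
Proof. intros f f' Hf j s t. rewrite !coef_lopp, Hf. reflexivity. Qed.

Add Parametric Morphism : lsub with signature LSeq ==> LSeq ==> LSeq as lsub_mor.
Proof. intros f f' Hf g g' Hg j s t. rewrite !coef_lsub, Hf, Hg. reflexivity. Qed.

Add Parametric Morphism : lmul with signature LSeq ==> LSeq ==> LSeq as lmul_mor.
Proof.
  intros f f' Hf g g' Hg j s t.
  rewrite (coef_lmul f g j s t (Z.min (j - ldeg g) (j - ldeg g')) (Z.max (ldeg f) (ldeg f'))) by lia.
  rewrite (coef_lmul f' g' j s t (Z.min (j - ldeg g) (j - ldeg g')) (Z.max (ldeg f) (ldeg f'))) by lia.
  apply zsum_ext. intros. rewrite Hf, Hg. reflexivity.
Qed.

Add Parametric Morphism : ldk with signature LSeq ==> LSeq as ldk_mor.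
Proof. intros f f' Hf j s t. rewrite !coef_ldk, Hf. reflexivity. Qed.

Add Parametric Morphism : lpos with signature LSeq ==> LSeq as lpos_mor.
Proof. intros f f' Hf j s t. rewrite !coef_lpos, Hf. reflexivity. Qed.

Lemma LSeq_coef_fun f g j : LSeq f g -> coef f j = coef g j.
Proof. intros H. extensionality s. extensionality t. apply H. Qed.

Add Parametric Morphism d : (lmap (dderiv d)) with signature LSeq ==> LSeq as lmap_mor.
Proof. intros f f' Hf j s t. rewrite !coef_lmapd, (LSeq_coef_fun f f' j Hf). reflexivity. Qed.

Add Parametric Morphism : lsubst with signature LSeq ==> eq ==> LSeq as lsubst_mor.
Proof.
  intros f f' Hf a j s t.
  rewrite (coef_lsubst f a j s t (Z.max (ldeg f) (ldeg f'))) by lia.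
  rewrite (coef_lsubst f' a j s t (Z.max (ldeg f) (ldeg f'))) by lia.
  apply zsum_ext. intros. rewrite Hf. reflexivity.
Qed.

Add Parametric Morphism : lpow with signature LSeq ==> eq ==> LSeq as lpow_mor.
Proof. intros f f' Hf n. induction n; simpl. reflexivity. rewrite IHn, Hf. reflexivity. Qed.

Add Parametric Morphism : bracket with signature LSeq ==> LSeq ==> LSeq as bracket_mor.
Proof. intros f f' Hf g g' Hg. unfold bracket. rewrite Hf, Hg. reflexivity. Qed.

Definition lzero : LS := lconst fzero.

Lemma coef_lzero j s t : coef lzero j s t = 0.
Proof. unfold lzero. rewrite coef_lconst. destruct (j =? 0)%Z; reflexivity. Qed.

Lemma coef_lone j s t : coef lone j s t = if (j =? 0)%Z then 1 else 0.
Proof. unfold lone. rewrite coef_lconst. reflexivity. Qed.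

Lemma coef_lmul_lconst c g j s t : coef (lmul (lconst c) g) j s t = c s t * coef g j s t.
Proof.
  rewrite (coef_lmul _ _ j s t (Z.min 0 (j - ldeg g)) (Z.max 0 (ldeg (lconst c)))) by lia.
  rewrite (zsum_delta _ _ 0); try lia.
  - rewrite coef_lconst. simpl. f_equal. f_equal. lia.
  - intros i Hi. rewrite coef_lconst. replace (i =? 0)%Z with false by (symmetry; apply Z.eqb_neq; lia). lra.
Qed.

Lemma lmul_comm f g : LSeq (lmul f g) (lmul g f).
Proof.
  intros j s t.
  rewrite (coef_lmul f g j s t (j - ldeg g) (ldeg f)) by lia.
  rewrite (coef_lmul g f j s t (j - ldeg f) (ldeg g)) by lia.
  transitivity (zsum (j - ldeg g) (ldeg f) (fun i => (fun x => coef g x s t * coef f (j - x) s t) (j - i)%Z)).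
  - apply zsum_ext; intros i Hi; cbv beta. replace (j - (j - i))%Z with i by lia. lra.
  - etransitivity; [apply (zsum_reflect (j - ldeg g) (ldeg f) j (fun x => coef g x s t * coef f (j - x) s t))|].
    f_equal; lia.
Qed.

Lemma lmul_assoc f g h : LSeq (lmul f (lmul g h)) (lmul (lmul f g) h).
Proof.
  intros j s t.
  set (df := ldeg f). set (dg := ldeg g). set (dh := ldeg h).
  rewrite (coef_lmul (lmul f g) h j s t (j - dh) (df + dg)) by (simpl; lia).
  rewrite (coef_lmul f (lmul g h) j s t (j - dg - dh) df) by (simpl; lia).
  transitivity (zsum (j - dg - dh) df (fun l => zsum (j - dh) (df + dg) (fun i =>
       coef f l s t * coef g (i - l) s t * coef h (j - i) s t))).
  - apply zsum_ext. intros l Hl.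
    rewrite (coef_lmul g h (j - l) s t (j - l - dh) dg) by lia.
    rewrite <- zsum_scal.
    rewrite (zsum_shift_r _ _ l).
    transitivity (zsum (j - l - dh + l) (dg + l) (fun i => coef f l s t * coef g (i - l) s t * coef h (j - i) s t)).
    { apply zsum_ext. intros i Hi. replace (j - l - (i - l))%Z with (j - i)%Z by lia. lra. }
    replace (j - l - dh + l)%Z with (j - dh)%Z by lia.
    symmetry. apply zsum_trunc_hi. lia. intros i Hi. rewrite (coef_above g) by lia. lra.
  - rewrite zsum_swap. apply zsum_ext. intros i Hi.
    rewrite (coef_lmul f g i s t (j - dg - dh) df) by lia.
    rewrite <- zsum_scal_r. reflexivity.
Qed.

Lemma lmul_distr f g h : LSeq (lmul (ladd f g) h) (ladd (lmul f h) (lmul g h)).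
Proof.
  intros j s t. rewrite coef_ladd.
  rewrite (coef_lmul _ _ j s t (j - ldeg h) (Z.max (ldeg f) (ldeg g))) by (simpl; lia).
  rewrite (coef_lmul f _ j s t (j - ldeg h) (Z.max (ldeg f) (ldeg g))) by (simpl; lia).
  rewrite (coef_lmul g _ j s t (j - ldeg h) (Z.max (ldeg f) (ldeg g))) by (simpl; lia).
  rewrite <- zsum_plus. apply zsum_ext. intros. rewrite coef_ladd. lra.
Qed.

Lemma LS_ring : ring_theory lzero lone ladd lmul lsub lopp LSeq.
Proof.
  constructor; intros.
  - intros j s t. rewrite coef_ladd, coef_lzero. lra.
  - intros j s t. rewrite !coef_ladd. lra.
  - intros j s t. rewrite !coef_ladd. lra.
  - intros j s t. unfold lone. rewrite coef_lmul_lconst. unfold fone. lra.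
  - apply lmul_comm.
  - apply lmul_assoc.
  - apply lmul_distr.
  - reflexivity.
  - intros j s t. rewrite coef_ladd, coef_lopp, coef_lzero. lra.
Qed.

Lemma LS_ring_ext : ring_eq_ext ladd lmul lopp LSeq.
Proof. constructor; [exact ladd_mor_Proper | exact lmul_mor_Proper | exact lopp_mor_Proper]. Qed.

Add Ring LSring : LS_ring (setoid LSeq_rel LS_ring_ext).

(** * The substitution k |-> k - a *)

Lemma lsubst_ladd f g a : LSeq (lsubst (ladd f g) a) (ladd (lsubst f a) (lsubst g a)).
Proof.
  intros i s t. rewrite coef_ladd.
  rewrite !(coef_lsubst _ a i s t (Z.max (ldeg f) (ldeg g))) by (simpl; lia).
  rewrite <- zsum_plus. apply zsum_ext. intros. rewrite coef_ladd. ring.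
Qed.

Lemma lsubst_lopp f a : LSeq (lsubst (lopp f) a) (lopp (lsubst f a)).
Proof.
  intros i s t. rewrite coef_lopp.
  rewrite !(coef_lsubst _ a i s t (ldeg f)) by (simpl; lia).
  rewrite <- zsum_opp. apply zsum_ext. intros. rewrite coef_lopp. ring.
Qed.

Lemma lsubst_lsub f g a : LSeq (lsubst (lsub f g) a) (lsub (lsubst f a) (lsubst g a)).
Proof. unfold lsub. rewrite lsubst_ladd, lsubst_lopp. reflexivity. Qed.

Lemma lsubst_lconst c a : LSeq (lsubst (lconst c) a) (lconst c).
Proof.
  intros i s t. rewrite coef_lconst.
  rewrite (coef_lsubst _ a i s t 0) by (simpl; lia).
  destruct (Z_le_gt_dec i 0).
  - rewrite (zsum_delta _ _ 0) by (try lia; intros j Hj; rewrite coef_lconst;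
        replace (j =? 0)%Z with false by (symmetry; apply Z.eqb_neq; lia); ring).
    rewrite coef_lconst. simpl (0 =? 0)%Z.
    destruct (Z.eq_dec i 0).
    + subst. simpl. rewrite binomR_0. ring.
    + replace (i =? 0)%Z with false by (symmetry; apply Z.eqb_neq; lia).
      rewrite binomR_nat_lt by lia. ring.
  - rewrite zsum_nil by lia. replace (i =? 0)%Z with false by (symmetry; apply Z.eqb_neq; lia). reflexivity.
Qed.

Lemma lsubst_lone a : LSeq (lsubst lone a) lone.
Proof. apply lsubst_lconst. Qed.

(* The coefficient of [k^i] in [(k + x)^j]. *)
Definition subst_weight (x : R) (i j : Z) : R :=
  if (i <=? j)%Z then binomR (IZR j) (Z.to_nat (j - i)) * x ^ Z.to_nat (j - i) else 0.

Lemma coef_lsubst_weight f a i s t lo hi : (lo <= i)%Z -> (ldeg f <= hi)%Z ->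
  coef (lsubst f a) i s t = zsum lo hi (fun j => subst_weight (- a s t) i j * coef f j s t).
Proof.
  intros Hlo Hhi. unfold subst_weight.
  transitivity (zsum lo hi (fun j => if (i <=? j)%Z
      then binomR (IZR j) (Z.to_nat (j - i)) * (- a s t) ^ Z.to_nat (j - i) * coef f j s t else 0)).
  - destruct (Z_le_gt_dec i (hi + 1)).
    + rewrite zsum_indicator_lo by lia. apply coef_lsubst; lia.
    + rewrite coef_above by (simpl; lia). symmetry. apply zsum_zero. intros j Hj.
      replace (i <=? j)%Z with false by (symmetry; apply Z.leb_gt; lia). reflexivity.
  - apply zsum_ext. intros j _. destruct (i <=? j)%Z; ring.
Qed.

(* [(k + x)^j1 (k + x)^j2 = (k + x)^(j1 + j2)], coefficientwise. *)
Lemma subst_weight_conv x i j1 j2 lo hi : (lo <= i - j2)%Z -> (j1 <= hi)%Z ->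
  zsum lo hi (fun l => subst_weight x l j1 * subst_weight x (i - l) j2) = subst_weight x i (j1 + j2).
Proof.
  intros Hlo Hhi. unfold subst_weight.
  destruct (Z_le_gt_dec i (j1 + j2)) as [Hle | Hgt].
  - replace (i <=? j1 + j2)%Z with true by (symmetry; apply Z.leb_le; lia).
    rewrite <- binomR_vandermondeZ by lia.
    rewrite (zsum_restrict lo hi (i - j2) j1); try lia.
    2:{ intros l [Hl | Hl].
        - replace (i - l <=? j2)%Z with false by (symmetry; apply Z.leb_gt; lia). ring.
        - replace (l <=? j1)%Z with false by (symmetry; apply Z.leb_gt; lia). ring. }
    rewrite <- zsum_scal_r. apply zsum_ext. intros l Hl.
    replace (l <=? j1)%Z with true by (symmetry; apply Z.leb_le; lia).
    replace (i - l <=? j2)%Z with true by (symmetry; apply Z.leb_le; lia).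
    replace (Z.to_nat (j1 + j2 - i)) with (Z.to_nat (j1 - l) + Z.to_nat (j2 - (i - l)))%nat by lia.
    rewrite pow_add. ring.
  - replace (i <=? j1 + j2)%Z with false by (symmetry; apply Z.leb_gt; lia).
    apply zsum_zero. intros l Hl. destruct (Z_le_gt_dec l j1).
    + replace (i - l <=? j2)%Z with false by (symmetry; apply Z.leb_gt; lia). ring.
    + replace (l <=? j1)%Z with false by (symmetry; apply Z.leb_gt; lia). ring.
Qed.

Lemma lsubst_lmul f g a : LSeq (lsubst (lmul f g) a) (lmul (lsubst f a) (lsubst g a)).
Proof.
  intros i s t. set (x := - a s t). set (df := ldeg f). set (dg := ldeg g).
  set (F := fun j => coef f j s t). set (G := fun j => coef g j s t).
  transitivity (zsum (i - dg) df (fun j1 => zsum (i - df) dg (fun j2 =>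
      F j1 * G j2 * subst_weight x i (j1 + j2)))).
  - rewrite (coef_lsubst_weight _ a i s t i (df + dg)) by (simpl; lia). fold x.
    transitivity (zsum i (df + dg) (fun n => zsum (i - dg) df (fun j1 =>
      subst_weight x i n * (F j1 * G (n - j1)%Z)))).
    { apply zsum_ext. intros n Hn. rewrite zsum_scal. f_equal. apply coef_lmul; lia. }
    rewrite zsum_swap. apply zsum_ext. intros j1 Hj1.
    rewrite (zsum_shift_r i (df + dg) (- j1)).
    transitivity (zsum (i + - j1) (df + dg + - j1) (fun j2 => F j1 * G j2 * subst_weight x i (j1 + j2))).
    { apply zsum_ext. intros j2 _. replace (j2 - - j1)%Z with (j1 + j2)%Z by lia.
      replace (j1 + j2 - j1)%Z with j2 by lia. ring. }
    apply (zsum_supp_eq _ _ _ _ (i - j1) dg); try lia.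
    intros j2 [Hj2 | Hj2].
    + unfold subst_weight. replace (i <=? j1 + j2)%Z with false by (symmetry; apply Z.leb_gt; lia). ring.
    + unfold G. rewrite (coef_above g) by lia. ring.
  - rewrite (coef_lmul _ _ i s t (i - dg) df) by (simpl; lia).
    transitivity (zsum (i - dg) df (fun l => zsum (i - dg) df (fun j1 => zsum (i - df) dg (fun j2 =>
       (subst_weight x l j1 * F j1) * (subst_weight x (i - l) j2 * G j2))))).
    2:{ apply zsum_ext. intros l Hl.
        rewrite (coef_lsubst_weight f a l s t (i - dg) df), (coef_lsubst_weight g a (i - l) s t (i - df) dg)
          by lia.
        rewrite <- zsum_scal_r. apply zsum_ext. intros j1 Hj1. rewrite <- zsum_scal. reflexivity. }
    symmetry. rewrite zsum_swap. apply zsum_ext. intros j1 Hj1.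
    rewrite zsum_swap. apply zsum_ext. intros j2 Hj2.
    rewrite <- (subst_weight_conv x i j1 j2 (i - dg) df) by lia.
    rewrite <- zsum_scal. apply zsum_ext. intros l Hl. ring.
Qed.

Lemma lsubst_lpow f a n : LSeq (lsubst (lpow f n) a) (lpow (lsubst f a) n).
Proof. induction n; simpl. apply lsubst_lone. rewrite lsubst_lmul, IHn. reflexivity. Qed.

Lemma binomR_shift j i : (i + 1 <= j)%Z ->
  IZR (i + 1) * binomR (IZR j) (Z.to_nat (j - (i + 1))) = IZR j * binomR (IZR (j - 1)) (Z.to_nat (j - 1 - i)).
Proof.
  intros H. replace (Z.to_nat (j - 1 - i)) with (Z.to_nat (j - (i + 1))) by lia.
  rewrite minus_IZR, <- binomR_absorb, Rmult_comm. f_equal.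
  rewrite INR_IZR_INZ, Z2Nat.id by lia. rewrite <- minus_IZR. f_equal. lia.
Qed.

Lemma ldk_lsubst f a : LSeq (ldk (lsubst f a)) (lsubst (ldk f) a).
Proof.
  intros i s t. rewrite coef_ldk.
  rewrite (coef_lsubst _ a (i+1) s t (ldeg f)) by lia.
  rewrite (coef_lsubst _ a i s t (ldeg f)) by (simpl; lia).
  rewrite (zsum_shift_r i (ldeg f) 1).
  rewrite (zsum_trunc_hi (i+1) (ldeg f) (ldeg f + 1)); [|lia|].
  2:{ intros j Hj. rewrite coef_ldk. replace (j - 1 + 1)%Z with j by lia. rewrite (coef_above f) by lia. ring. }
  rewrite <- zsum_scal. apply zsum_ext. intros j Hj. rewrite coef_ldk.
  replace (j - 1 + 1)%Z with j by lia.
  replace (Z.to_nat (j - 1 - i)) with (Z.to_nat (j - (i + 1))) by lia.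
  transitivity ((IZR (i + 1) * binomR (IZR j) (Z.to_nat (j - (i + 1)))) * (- a s t) ^ Z.to_nat (j - (i + 1)) * coef f j s t); [ring|].
  rewrite binomR_shift by lia.
  replace (Z.to_nat (j - 1 - i)) with (Z.to_nat (j - (i + 1))) by lia. ring.
Qed.

Lemma peval_zsum f b s t : peval f b s t = zsum 0 (ldeg f) (fun j => coef f j s t * (b s t) ^ (Z.to_nat j)).
Proof. reflexivity. Qed.

Lemma lpos_lsubst F a : LSeq (lpos (lsubst F a))
    (lsub (lsubst (lpos F) a) (lconst (peval (lpos F) (fopp a)))).
Proof.
  intros i s t. rewrite coef_lpos, coef_lsub, coef_lconst.
  rewrite (coef_lsubst (lpos F) a i s t (ldeg F)) by (simpl; lia).
  destruct (Z_lt_le_dec 0 i) as [Hi|Hi].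
  - replace (0 <? i)%Z with true by (symmetry; apply Z.ltb_lt; lia).
    replace (i =? 0)%Z with false by (symmetry; apply Z.eqb_neq; lia).
    rewrite (coef_lsubst F a i s t (ldeg F)) by lia. rewrite Rminus_0_r.
    apply zsum_ext. intros j Hj. rewrite coef_lpos. replace (0 <? j)%Z with true by (symmetry; apply Z.ltb_lt; lia). reflexivity.
  - replace (0 <? i)%Z with false by (symmetry; apply Z.ltb_ge; lia).
    destruct (Z.eq_dec i 0) as [->|Hne].
    + simpl (0 =? 0)%Z. rewrite peval_zsum. simpl (ldeg (lpos F)).
      rewrite <- (Rminus_diag (zsum 0 (ldeg F) (fun j => coef (lpos F) j s t * fopp a s t ^ Z.to_nat j))).
      f_equal. apply zsum_ext. intros j Hj.
      replace (IZR j) with (INR (Z.to_nat (j - 0))) by (rewrite INR_IZR_INZ; f_equal; lia).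
      rewrite binomR_diag. unfold fopp. replace (j - 0)%Z with j by lia. ring.
    + replace (i =? 0)%Z with false by (symmetry; apply Z.eqb_neq; lia).
      rewrite zsum_zero; [ring|]. intros j Hj. rewrite coef_lpos.
      destruct (Z_lt_le_dec 0 j).
      * rewrite binomR_nat_lt by lia. ring.
      * replace (0 <? j)%Z with false by (symmetry; apply Z.ltb_ge; lia). ring.
Qed.

Lemma Bn_lsubst L a n :
  LSeq (Bn (lsubst L a) n) (lsub (lsubst (Bn L n) a) (lconst (peval (Bn L n) (fopp a)))).
Proof. unfold Bn. rewrite <- lsubst_lpow. apply lpos_lsubst. Qed.

Definition dline (d : dir) (f : CF) (s : R) (t : nat -> R) : R -> R := fun y => apply_dir d y f s t.
Definition ex_dd (d : dir) (f : CF) (s : R) (t : nat -> R) : Prop := ex_derive (dline d f s t) (coord d s t).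

Lemma dderiv_dline d f s t : dderiv d f s t = Derive (dline d f s t) (coord d s t).
Proof. reflexivity. Qed.

Lemma dline_ext d f g s t : (forall s t, f s t = g s t) -> dline d f s t = dline d g s t.
Proof. intros H. extensionality y. unfold dline. destruct d; simpl; apply H. Qed.

Lemma dderiv_ext d f g s t : (forall s t, f s t = g s t) -> dderiv d f s t = dderiv d g s t.
Proof. intros H. rewrite !dderiv_dline, (dline_ext d f g s t H). reflexivity. Qed.
Lemma ex_dd_ext d f g s t : (forall s t, f s t = g s t) -> ex_dd d f s t -> ex_dd d g s t.
Proof. intros H. unfold ex_dd. rewrite (dline_ext d f g s t H). auto. Qed.

Ltac solve_dline := intros; extensionality y; unfold dline; match goal with dd : dir |- _ => destruct dd end; reflexivity.

Lemma dline_plus d f g s t : dline d (fun s t => f s t + g s t) s t = fun y => dline d f s t y + dline d g s t y. Proof. solve_dline. Qed.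
Lemma dline_mult d f g s t : dline d (fun s t => f s t * g s t) s t = fun y => dline d f s t y * dline d g s t y. Proof. solve_dline. Qed.
Lemma dline_opp d f s t : dline d (fun s t => - f s t) s t = fun y => - dline d f s t y. Proof. solve_dline. Qed.
Lemma dline_scal d c f s t : dline d (fun s t => c * f s t) s t = fun y => c * dline d f s t y. Proof. solve_dline. Qed.
Lemma dline_pow d f m s t : dline d (fun s t => f s t ^ m) s t = fun y => dline d f s t y ^ m. Proof. solve_dline. Qed.
Lemma dline_div d f g s t : dline d (fun s t => f s t / g s t) s t = fun y => dline d f s t y / dline d g s t y. Proof. solve_dline. Qed.
Lemma dline_comp d (h : R -> R) f s t : dline d (fun s t => h (f s t)) s t = fun y => h (dline d f s t y). Proof. solve_dline. Qed.
Lemma dline_const d c s t : dline d (fun _ _ => c) s t = fun _ => c. Proof. solve_dline. Qed.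
Lemma dline_at d f s t : dline d f s t (coord d s t) = f s t.
Proof. unfold dline. destruct d; simpl. reflexivity. f_equal. extensionality j. unfold upd. destruct (Nat.eqb_spec j i); subst; reflexivity. Qed.

Lemma ex_dd_plus d f g s t : ex_dd d f s t -> ex_dd d g s t -> ex_dd d (fun s t => f s t + g s t) s t.
Proof. unfold ex_dd. rewrite dline_plus. intros. apply (ex_derive_plus (dline d f s t) (dline d g s t)); auto. Qed.
Lemma dderiv_plus d f g s t : ex_dd d f s t -> ex_dd d g s t -> dderiv d (fun s t => f s t + g s t) s t = dderiv d f s t + dderiv d g s t.
Proof. unfold ex_dd. intros. rewrite !dderiv_dline, dline_plus. apply Derive_plus; auto. Qed.
Lemma ex_dd_mult d f g s t : ex_dd d f s t -> ex_dd d g s t -> ex_dd d (fun s t => f s t * g s t) s t.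
Proof. unfold ex_dd. rewrite dline_mult. intros. apply (ex_derive_mult (dline d f s t) (dline d g s t)); auto. Qed.
Lemma dderiv_mult d f g s t : ex_dd d f s t -> ex_dd d g s t ->
  dderiv d (fun s t => f s t * g s t) s t = dderiv d f s t * g s t + f s t * dderiv d g s t.
Proof. unfold ex_dd. intros. rewrite !dderiv_dline, dline_mult, Derive_mult by auto. rewrite !dline_at. reflexivity. Qed.
Lemma ex_dd_opp d f s t : ex_dd d f s t -> ex_dd d (fun s t => - f s t) s t.
Proof. unfold ex_dd. rewrite dline_opp. intros. apply (ex_derive_opp (dline d f s t)); auto. Qed.
Lemma dderiv_opp d f s t : dderiv d (fun s t => - f s t) s t = - dderiv d f s t.
Proof. rewrite !dderiv_dline, dline_opp. apply Derive_opp. Qed.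
Lemma ex_dd_scal d c f s t : ex_dd d f s t -> ex_dd d (fun s t => c * f s t) s t.
Proof. unfold ex_dd. rewrite dline_scal. intros. apply (ex_derive_scal (dline d f s t)); auto. Qed.
Lemma dderiv_scal d c f s t : dderiv d (fun s t => c * f s t) s t = c * dderiv d f s t.
Proof. rewrite !dderiv_dline, dline_scal. apply Derive_scal. Qed.
Lemma ex_dd_const d c s t : ex_dd d (fun _ _ => c) s t.
Proof. unfold ex_dd. rewrite dline_const. apply ex_derive_const. Qed.
Lemma dderiv_const d c s t : dderiv d (fun _ _ => c) s t = 0.
Proof. rewrite dderiv_dline, dline_const. apply Derive_const. Qed.
Lemma ex_dd_pow d f m s t : ex_dd d f s t -> ex_dd d (fun s t => f s t ^ m) s t.
Proof. unfold ex_dd. rewrite dline_pow. intros. apply ex_derive_pow; auto. Qed.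
Lemma dderiv_pow d f m s t : ex_dd d f s t ->
  dderiv d (fun s t => f s t ^ m) s t = INR m * dderiv d f s t * f s t ^ (pred m).
Proof. unfold ex_dd. intros. rewrite !dderiv_dline, dline_pow, Derive_pow by auto. rewrite dline_at. reflexivity. Qed.
Lemma ex_dd_div d f g s t : ex_dd d f s t -> ex_dd d g s t -> g s t <> 0 -> ex_dd d (fun s t => f s t / g s t) s t.
Proof. unfold ex_dd. rewrite dline_div. intros. apply ex_derive_div; auto. rewrite dline_at; auto. Qed.
Lemma ex_dd_exp d f s t : ex_dd d f s t -> ex_dd d (fun s t => exp (f s t)) s t.
Proof.
  unfold ex_dd. rewrite dline_comp. intros H.
  apply (ex_derive_comp exp (dline d f s t)); auto. apply ex_derive_Reals_1. apply derivable_pt_exp.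
Qed.
Lemma dderiv_exp d f s t : ex_dd d f s t -> dderiv d (fun s t => exp (f s t)) s t = dderiv d f s t * exp (f s t).
Proof.
  unfold ex_dd. intros H. rewrite !dderiv_dline, dline_comp.
  rewrite Derive_comp; auto. rewrite dline_at. f_equal. apply is_derive_unique. apply is_derive_exp.
  apply ex_derive_Reals_1. apply derivable_pt_exp.
Qed.

Lemma is_derive_ln_abs x : x <> 0 -> is_derive (fun y => ln (Rabs y)) x (/ x).
Proof.
  intros Hx. destruct (Rlt_or_le 0 x) as [Hp|Hn].
  - apply (is_derive_ext_loc ln). 
    + apply (locally_interval _ x 0 p_infty); simpl; auto. intros y Hy _. rewrite Rabs_pos_eq by lra. reflexivity.
    + apply is_derive_ln; auto.
  - assert (Hneg : x < 0) by lra.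
    apply (is_derive_ext_loc (fun y => ln (- y))).
    + apply (locally_interval _ x m_infty 0); simpl; auto. intros y _ Hy. rewrite Rabs_left by lra. reflexivity.
    + auto_derive. lra. field. lra.
Qed.

Lemma dderiv_ln_abs d f s t : ex_dd d f s t -> f s t <> 0 ->
  dderiv d (fun s t => ln (Rabs (f s t))) s t = dderiv d f s t / f s t.
Proof.
  unfold ex_dd. intros H Hf. rewrite !dderiv_dline, (dline_comp d (fun y => ln (Rabs y)) f s t).
  rewrite (Derive_comp (fun y => ln (Rabs y)) (dline d f s t)); auto. rewrite dline_at. unfold Rdiv. f_equal. apply is_derive_unique. apply is_derive_ln_abs; auto.
  rewrite dline_at. eexists. apply is_derive_ln_abs; auto.
Qed.

Lemma dline_zsum d a b F s t :
  dline d (fun s t => zsum a b (fun j => F j s t)) s t = fun y => zsum a b (fun j => dline d (F j) s t y).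
Proof. solve_dline. Qed.

Lemma zsum_derive a b (G : Z -> R -> R) x :
  (forall j, (a <= j <= b)%Z -> ex_derive (G j) x) ->
  ex_derive (fun y => zsum a b (fun j => G j y)) x /\
  Derive (fun y => zsum a b (fun j => G j y)) x = zsum a b (fun j => Derive (G j) x).
Proof.
  revert a b. apply (zsum_ind (fun a b => (forall j, (a <= j <= b)%Z -> ex_derive (G j) x) ->
  ex_derive (fun y => zsum a b (fun j => G j y)) x /\
  Derive (fun y => zsum a b (fun j => G j y)) x = zsum a b (fun j => Derive (G j) x))).
  - intros a b H _. split.
    + apply (ex_derive_ext (fun _ => 0)). intros; rewrite zsum_nil; auto. apply ex_derive_const.
    + rewrite zsum_nil by auto. rewrite (Derive_ext _ (fun _ => 0)). apply Derive_const. intros; rewrite zsum_nil; auto.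
  - intros a b Hab IH H.
    destruct IH as [IH1 IH2]. intros; apply H; lia.
    split.
    + apply (ex_derive_ext (fun y => G a y + zsum (a+1) b (fun j => G j y))).
      intros; rewrite (zsum_first a b) by auto; reflexivity.
      apply (ex_derive_plus (G a) (fun y => zsum (a+1) b (fun j => G j y))); auto. apply H; lia.
    + rewrite (Derive_ext _ (fun y => G a y + zsum (a+1) b (fun j => G j y))).
      rewrite Derive_plus; auto. rewrite IH2, (zsum_first a b) by auto. reflexivity. apply H; lia.
      intros; rewrite (zsum_first a b) by auto; reflexivity.
Qed.

Lemma ex_dd_zsum d a b F s t : (forall j, (a <= j <= b)%Z -> ex_dd d (F j) s t) ->
  ex_dd d (fun s t => zsum a b (fun j => F j s t)) s t.
Proof. unfold ex_dd. intros H. rewrite dline_zsum. apply zsum_derive. auto. Qed.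
Lemma dderiv_zsum d a b F s t : (forall j, (a <= j <= b)%Z -> ex_dd d (F j) s t) ->
  dderiv d (fun s t => zsum a b (fun j => F j s t)) s t = zsum a b (fun j => dderiv d (F j) s t).
Proof. unfold ex_dd. intros H. rewrite dderiv_dline, dline_zsum. apply zsum_derive. auto. Qed.

Definition ex_dd_fun (d : dir) (f : CF) : Prop := forall s t, ex_dd d f s t.
Definition ex_dd_LS (d : dir) (f : LS) : Prop := forall j, ex_dd_fun d (coef f j).

Lemma coef_lmul_fun f g j lo hi : (lo <= j - ldeg g)%Z -> (ldeg f <= hi)%Z ->
  coef (lmul f g) j = fun s t => zsum lo hi (fun i => coef f i s t * coef g (j - i) s t).
Proof. intros. extensionality s. extensionality t. apply coef_lmul; auto. Qed.

Lemma coef_lsubst_fun f a i hi : (ldeg f <= hi)%Z ->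
  coef (lsubst f a) i = fun s t =>
  zsum i hi (fun j => binomR (IZR j) (Z.to_nat (j - i)) * (- a s t) ^ (Z.to_nat (j - i)) * coef f j s t).
Proof. intros. extensionality s. extensionality t. apply coef_lsubst; auto. Qed.

Lemma ex_dd_LS_ladd d f g : ex_dd_LS d f -> ex_dd_LS d g -> ex_dd_LS d (ladd f g).
Proof. unfold ex_dd_LS, ex_dd_fun in *. intros Hf Hg j s t. eapply ex_dd_ext. intros; symmetry; apply coef_ladd. apply ex_dd_plus; auto. Qed.
Lemma ex_dd_LS_lopp d f : ex_dd_LS d f -> ex_dd_LS d (lopp f).
Proof. unfold ex_dd_LS, ex_dd_fun in *. intros Hf j s t. eapply ex_dd_ext. intros; symmetry; apply coef_lopp. apply ex_dd_opp; auto. Qed.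
Lemma ex_dd_LS_lmul d f g : ex_dd_LS d f -> ex_dd_LS d g -> ex_dd_LS d (lmul f g).
Proof.
  unfold ex_dd_LS, ex_dd_fun in *. intros Hf Hg j s t. rewrite (coef_lmul_fun f g j (j - ldeg g) (ldeg f)) by lia.
  apply ex_dd_zsum. intros. apply ex_dd_mult; auto.
Qed.
Lemma ex_dd_LS_lconst d c : ex_dd_fun d c -> ex_dd_LS d (lconst c).
Proof.
  unfold ex_dd_LS, ex_dd_fun in *. intros Hc j s t. eapply ex_dd_ext. intros; symmetry; apply coef_lconst.
  destruct (j =? 0)%Z. apply Hc. apply ex_dd_const.
Qed.
Lemma ex_dd_LS_lmono d k c : ex_dd_fun d c -> ex_dd_LS d (lmono k c).
Proof.
  unfold ex_dd_LS, ex_dd_fun in *. intros Hc j s t. eapply ex_dd_ext. intros; symmetry; apply coef_lmono.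
  destruct (j =? k)%Z. apply Hc. apply ex_dd_const.
Qed.
Lemma ex_dd_LS_lone d : ex_dd_LS d lone.
Proof. apply ex_dd_LS_lconst. intros s t. apply ex_dd_const. Qed.
Lemma ex_dd_LS_lpow d f n : ex_dd_LS d f -> ex_dd_LS d (lpow f n).
Proof. intros H. induction n; simpl. apply ex_dd_LS_lone. apply ex_dd_LS_lmul; auto. Qed.
Lemma ex_dd_LS_lpos d f : ex_dd_LS d f -> ex_dd_LS d (lpos f).
Proof.
  unfold ex_dd_LS, ex_dd_fun in *. intros Hf j s t. eapply ex_dd_ext. intros; symmetry; apply coef_lpos.
  destruct (0 <? j)%Z. apply Hf. apply ex_dd_const.
Qed.
Lemma ex_dd_LS_lsubst d f a : ex_dd_LS d f -> ex_dd_fun d a -> ex_dd_LS d (lsubst f a).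
Proof.
  unfold ex_dd_LS, ex_dd_fun in *. intros Hf Ha j s t. rewrite (coef_lsubst_fun f a j (ldeg f)) by lia.
  apply ex_dd_zsum. intros. apply ex_dd_mult; auto. apply ex_dd_scal. apply ex_dd_pow. apply ex_dd_opp. apply Ha.
Qed.
Lemma ex_dd_LS_Bn d f n : ex_dd_LS d f -> ex_dd_LS d (Bn f n).
Proof. intros. apply ex_dd_LS_lpos, ex_dd_LS_lpow; auto. Qed.

Section CoefficientwiseDerivative.
Variable d : dir.
Notation D := (dderiv d).

Lemma lmap_dderiv_ladd f g : ex_dd_LS d f -> ex_dd_LS d g -> LSeq (lmap D (ladd f g)) (ladd (lmap D f) (lmap D g)).
Proof.
  unfold ex_dd_LS, ex_dd_fun in *. intros Hf Hg j s t. rewrite coef_ladd, !coef_lmapd.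
  rewrite (dderiv_ext _ _ (fun s t => coef f j s t + coef g j s t)) by (intros; apply coef_ladd).
  apply dderiv_plus; auto.
Qed.

Lemma lmap_dderiv_lopp f : LSeq (lmap D (lopp f)) (lopp (lmap D f)).
Proof.
  intros j s t. rewrite coef_lopp, !coef_lmapd.
  rewrite (dderiv_ext _ _ (fun s t => - coef f j s t)) by (intros; apply coef_lopp).
  apply dderiv_opp.
Qed.

Lemma lmap_dderiv_lsub f g : ex_dd_LS d f -> ex_dd_LS d g -> LSeq (lmap D (lsub f g)) (lsub (lmap D f) (lmap D g)).
Proof. intros. unfold lsub. rewrite lmap_dderiv_ladd, lmap_dderiv_lopp. reflexivity. auto. apply ex_dd_LS_lopp; auto. Qed.

Lemma lmap_dderiv_lmul f g : ex_dd_LS d f -> ex_dd_LS d g ->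
  LSeq (lmap D (lmul f g)) (ladd (lmul (lmap D f) g) (lmul f (lmap D g))).
Proof.
  unfold ex_dd_LS, ex_dd_fun in *. intros Hf Hg j s t. rewrite coef_ladd, !coef_lmapd.
  rewrite (coef_lmul_fun f g j (j - ldeg g) (ldeg f)) by lia.
  rewrite dderiv_zsum by (intros; apply ex_dd_mult; auto).
  rewrite (coef_lmul (lmap D f) g j s t (j - ldeg g) (ldeg f)) by (simpl; lia).
  rewrite (coef_lmul f (lmap D g) j s t (j - ldeg g) (ldeg f)) by (simpl; lia).
  rewrite <- zsum_plus. apply zsum_ext. intros i Hi. rewrite !coef_lmapd.
  apply dderiv_mult; auto.
Qed.

Lemma lmap_dderiv_lconst c : LSeq (lmap D (lconst c)) (lconst (D c)).
Proof.
  intros j s t. rewrite coef_lmapd, coef_lconst.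
  rewrite (dderiv_ext _ _ (fun s t => if (j =? 0)%Z then c s t else 0)) by (intros; apply coef_lconst).
  destruct (j =? 0)%Z. reflexivity. apply dderiv_const.
Qed.

Lemma lmap_dderiv_lmono k c : LSeq (lmap D (lmono k c)) (lmono k (D c)).
Proof.
  intros j s t. rewrite coef_lmapd, coef_lmono.
  rewrite (dderiv_ext _ _ (fun s t => if (j =? k)%Z then c s t else 0)) by (intros; apply coef_lmono).
  destruct (j =? k)%Z. reflexivity. apply dderiv_const.
Qed.

Lemma lmap_dderiv_lsubst f a : ex_dd_LS d f -> ex_dd_fun d a ->
  LSeq (lmap D (lsubst f a)) (ladd (lsubst (lmap D f) a) (lmul (lconst (fopp (D a))) (lsubst (ldk f) a))).
Proof.
  unfold ex_dd_LS, ex_dd_fun in *. intros Hf Ha i s t. rewrite coef_ladd, coef_lmapd, coef_lmul_lconst.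
  rewrite (coef_lsubst (ldk f) a i s t (ldeg f)) by (simpl; lia).
  rewrite (zsum_shift_r i (ldeg f) 1).
  rewrite (zsum_trunc_hi (i+1) (ldeg f) (ldeg f + 1)); [|lia|].
  2:{ intros j Hj. cbv beta. rewrite coef_ldk. replace (j - 1 + 1)%Z with j by lia. rewrite (coef_above f) by lia. ring. }
  rewrite (coef_lsubst_fun f a i (ldeg f)) by lia.
  rewrite dderiv_zsum by (intros; apply ex_dd_mult; auto; apply ex_dd_scal, ex_dd_pow, ex_dd_opp, Ha).
  rewrite (coef_lsubst (lmap D f) a i s t (ldeg f)) by (simpl; lia).
  destruct (Z_le_gt_dec i (ldeg f)) as [Hi|Hi].
  2:{ rewrite !zsum_nil by lia. unfold fopp. ring. }
  rewrite (zsum_first i (ldeg f)) by lia.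
  rewrite (zsum_first i (ldeg f) (fun j => _ * coef (lmap D f) j s t)) by lia.
  replace (i - i)%Z with 0%Z by lia. simpl Z.to_nat.
  rewrite Rplus_assoc. f_equal.
  { rewrite (dderiv_ext _ _ (fun s t => binomR (IZR i) 0 * coef f i s t)) by (intros; simpl; ring).
    rewrite dderiv_scal, coef_lmapd. simpl. ring. }
  rewrite <- zsum_scal, <- zsum_plus.
  apply zsum_ext. intros j Hj.
  rewrite dderiv_mult by (auto; apply ex_dd_scal, ex_dd_pow, ex_dd_opp, Ha).
  rewrite dderiv_scal, dderiv_pow by (apply ex_dd_opp, Ha). rewrite dderiv_opp, coef_lmapd, coef_ldk.
  replace (j - 1 + 1)%Z with j by lia. unfold fopp.
  replace (Z.to_nat (j - 1 - i)) with (Z.to_nat (j - (i+1))) by lia.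
  assert (Em : Z.to_nat (j - i) = S (Z.to_nat (j - (i+1)))) by lia. rewrite Em. simpl pred.
  set (m := Z.to_nat (j - (i+1))).
  transitivity (binomR (IZR j) (S m) * (- a s t) ^ S m * dderiv d (coef f j) s t +
     (binomR (IZR j) (S m) * INR (S m)) * - dderiv d a s t * (- a s t) ^ m * coef f j s t); [ring|].
  rewrite binomR_S_l, minus_IZR. ring.
Qed.
End CoefficientwiseDerivative.

Lemma ldk_ladd f g : LSeq (ldk (ladd f g)) (ladd (ldk f) (ldk g)).
Proof. intros j s t. rewrite coef_ladd, !coef_ldk, coef_ladd. ring. Qed.
Lemma ldk_lopp f : LSeq (ldk (lopp f)) (lopp (ldk f)).
Proof. intros j s t. rewrite coef_lopp, !coef_ldk, coef_lopp. ring. Qed.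
Lemma ldk_lsub f g : LSeq (ldk (lsub f g)) (lsub (ldk f) (ldk g)).
Proof. unfold lsub. rewrite ldk_ladd, ldk_lopp. reflexivity. Qed.
Lemma ldk_lconst c : LSeq (ldk (lconst c)) lzero.
Proof. intros j s t. rewrite coef_ldk, coef_lconst, coef_lzero. destruct (j + 1 =? 0)%Z eqn:E.
  apply Z.eqb_eq in E. replace (j+1)%Z with 0%Z. simpl. ring. ring. Qed.
Lemma ldk_lmono k c : LSeq (ldk (lmono k c)) (lmono (k - 1) (fscal (IZR k) c)).
Proof. intros j s t. rewrite coef_ldk, !coef_lmono. destruct (Z.eqb_spec (j+1) k); destruct (Z.eqb_spec j (k-1)); try lia.
  unfold fscal. subst. reflexivity. ring. Qed.

Lemma ldk_lmul f g : LSeq (ldk (lmul f g)) (ladd (lmul (ldk f) g) (lmul f (ldk g))).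
Proof.
  intros j s t. rewrite coef_ladd, coef_ldk.
  rewrite (coef_lmul f g (j+1) s t (j - ldeg g) (ldeg f)) by lia.
  rewrite (coef_lmul (ldk f) g j s t (j - ldeg g - 1) (ldeg f)) by (simpl; lia).
  rewrite (coef_lmul f (ldk g) j s t (j - ldeg g) (ldeg f)) by (simpl; lia).
  rewrite (zsum_shift_r (j - ldeg g - 1) (ldeg f) 1).
  rewrite (zsum_trunc_hi (j - ldeg g - 1 + 1) (ldeg f) (ldeg f + 1)); [|lia|].
  2:{ intros i Hi. rewrite coef_ldk. replace (i - 1 + 1)%Z with i by lia. rewrite (coef_above f) by lia. ring. }
  replace (j - ldeg g - 1 + 1)%Z with (j - ldeg g)%Z by lia.
  rewrite <- zsum_scal, <- zsum_plus. apply zsum_ext. intros i Hi.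
  rewrite !coef_ldk. replace (i - 1 + 1)%Z with i by lia.
  replace (j - (i - 1))%Z with (j + 1 - i)%Z by lia. replace (j - i + 1)%Z with (j + 1 - i)%Z by lia.
  rewrite !minus_IZR, !plus_IZR. ring.
Qed.

(** * e^(ad phi) as a Taylor shift *)

Lemma dx_dderiv : dx = dderiv (Dc 0). Proof. reflexivity. Qed.

Lemma coef_adphi phi g j s t : coef (adphi phi g) j s t = - (dx phi s t * (IZR (j + 1) * coef g (j + 1) s t)).
Proof.
  unfold adphi, bracket. rewrite dx_dderiv. rewrite ldk_lconst, lmap_dderiv_lconst.
  rewrite coef_lsub, coef_lmul_lconst, coef_ldk.
  rewrite (coef_lmul lzero _ j s t (j - ldeg (lmap (dderiv (Dc 0)) g)) 0) by (simpl; lia).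
  rewrite zsum_zero. ring. intros. rewrite coef_lzero. ring.
Qed.

Lemma coef_adpow phi g m j s t :
  coef (adpow phi m g) j s t = (- dx phi s t) ^ m * falling (IZR (j + Z.of_nat m)) m * coef g (j + Z.of_nat m) s t.
Proof.
  revert j. induction m; intros j.
  - cbn [adpow Z.of_nat pow]. rewrite Z.add_0_r, falling_0. ring.
  - simpl adpow. rewrite coef_adphi, IHm.
    replace (j + 1 + Z.of_nat m)%Z with (j + Z.of_nat (S m))%Z by lia.
    rewrite falling_S_r. rewrite INR_IZR_INZ. rewrite <- minus_IZR.
    replace (j + Z.of_nat (S m) - Z.of_nat m)%Z with (j + 1)%Z by lia.
    simpl pow. ring.
Qed.

Lemma is_expad_lsubst_Lax phi u : is_expad phi (Lax u) (lsubst (Lax u) (dx phi)).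
Proof.
  intros j s t.
  set (G := fun m => coef (adpow phi m (Lax u)) j s t / INR (fact m)).
  assert (HG : forall m, (1 < j + Z.of_nat m)%Z -> G m = 0).
  { intros m Hm. unfold G. rewrite coef_adpow. rewrite (coef_above (Lax u)) by (simpl; lia). unfold Rdiv. ring. }
  set (K := S (Z.to_nat (1 - j))).
  exists K. intros M' HM'.
  change (nsum M' G = coef (lsubst (Lax u) (dx phi)) j s t).
  rewrite (nsum_trunc K M' G) by (auto; intros m Hm; apply HG; lia).
  rewrite (coef_lsubst _ _ j s t 1) by (simpl; lia).
  destruct (Z_le_gt_dec j 1) as [Hj|Hj].
  - unfold K.
    etransitivity; [apply (nsum_ext _ G (fun r => (fun z => G (Z.to_nat z)) (Z.of_nat r))); intros; cbv beta; rewrite Nat2Z.id; reflexivity|].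
    etransitivity; [symmetry; apply (zsum0_nsum (Z.to_nat (1 - j)) (fun z => G (Z.to_nat z)))|].
    replace (Z.of_nat (Z.to_nat (1 - j))) with (1 - j)%Z by lia.
    transitivity (zsum 0 (1 - j) (fun r => (fun k => binomR (IZR k) (Z.to_nat (k - j)) * (- dx phi s t) ^ Z.to_nat (k - j) * coef (Lax u) k s t) (r + j)%Z)).
    + apply zsum_ext. intros r Hr. cbv beta. unfold G. rewrite coef_adpow.
      replace (j + Z.of_nat (Z.to_nat r))%Z with (r + j)%Z by lia.
      replace (Z.to_nat (r + j - j)) with (Z.to_nat r) by lia.
      unfold binomR. field. apply INR_fact_neq_0.
    + etransitivity; [apply (zsum_shift 0 (1 - j) j (fun k => binomR (IZR k) (Z.to_nat (k - j)) * (- dx phi s t) ^ Z.to_nat (k - j) * coef (Lax u) k s t))|]. f_equal; lia.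
  - rewrite zsum_nil by lia. unfold K. replace (Z.to_nat (1 - j)) with 0%nat by lia.
    rewrite nsum_S_r. unfold nsum. simpl. rewrite HG by lia. ring.
Qed.

(** * Logarithmic derivatives *)

Lemma lmul_lconst a b : LSeq (lmul (lconst a) (lconst b)) (lconst (fmul a b)).
Proof. intros j s t. rewrite coef_lmul_lconst, !coef_lconst. destruct (j =? 0)%Z; unfold fmul; ring. Qed.
Lemma ladd_lconst a b : LSeq (ladd (lconst a) (lconst b)) (lconst (fadd a b)).
Proof. intros j s t. rewrite coef_ladd, !coef_lconst. destruct (j =? 0)%Z; unfold fadd; ring. Qed.
Lemma lopp_lconst a : LSeq (lopp (lconst a)) (lconst (fopp a)).
Proof. intros j s t. rewrite coef_lopp, !coef_lconst. destruct (j =? 0)%Z; unfold fopp; ring. Qed.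
Lemma lconst_ext a b : (forall s t, a s t = b s t) -> LSeq (lconst a) (lconst b).
Proof. intros H j s t. rewrite !coef_lconst. destruct (j =? 0)%Z; auto. Qed.
Lemma lconst_one : LSeq (lconst (fconst 1)) lone. Proof. reflexivity. Qed.

(* Locality ([ld_local]) is what lets [dl] commute with the coefficientwise
   truncations of the infinite series [log1q]. *)
Record lderivation (dl : LS -> LS) (G : LS -> Prop) : Prop := {
  ld_compat : forall f g, LSeq f g -> LSeq (dl f) (dl g);
  ld_add : forall f g, G f -> G g -> LSeq (dl (ladd f g)) (ladd (dl f) (dl g));
  ld_mul : forall f g, G f -> G g -> LSeq (dl (lmul f g)) (ladd (lmul (dl f) g) (lmul f (dl g)));
  ld_const : forall c : R, LSeq (dl (lconst (fconst c))) lzero;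
  ld_local : forall f g j, (forall i s t, (j <= i)%Z -> coef f i s t = coef g i s t) ->
                         forall s t, coef (dl f) j s t = coef (dl g) j s t;
  ld_deg : forall f, (ldeg (dl f) <= ldeg f)%Z;
  ld_dom_add : forall f g, G f -> G g -> G (ladd f g);
  ld_dom_mul : forall f g, G f -> G g -> G (lmul f g);
  ld_dom_const : forall c : R, G (lconst (fconst c))
}.

Definition log_coef (m : nat) : R := (-1) ^ (S m) / INR m.
Definition lsign (m : nat) : LS := lconst (fconst ((-1) ^ m)).

Fixpoint log1p_trunc (q : LS) (M : nat) : LS :=
  match M with O => lzero | S M' => ladd (log1p_trunc q M') (lmul (lconst (fconst (log_coef (S M')))) (lpow q (S M'))) end.

Lemma lsign_S m : LSeq (lsign (S m)) (lopp (lsign m)).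
Proof. unfold lsign. rewrite lopp_lconst. apply lconst_ext. intros. unfold fopp, fconst. simpl. ring. Qed.

Lemma lsign_0 : LSeq (lsign 0) lone. Proof. reflexivity. Qed.

Section LogDerivative.
Variable dl : LS -> LS.
Variable G : LS -> Prop.
Variable Hd : lderivation dl G.
Variable q : LS.
Variable Gq : G q.

Lemma dom_lpow m : G (lpow q m).
Proof. induction m; simpl. apply (ld_dom_const _ _ Hd 1). apply (ld_dom_mul _ _ Hd); auto. Qed.

Lemma dom_log1p_trunc M : G (log1p_trunc q M).
Proof. induction M. apply (ld_dom_const _ _ Hd 0). apply (ld_dom_add _ _ Hd); auto. apply (ld_dom_mul _ _ Hd). apply (ld_dom_const _ _ Hd). apply dom_lpow. Qed.

Lemma lderiv_lmul_lconst c f : G f -> LSeq (dl (lmul (lconst (fconst c)) f)) (lmul (lconst (fconst c)) (dl f)).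
Proof.
  intros Hf. rewrite (ld_mul _ _ Hd) by (auto; apply (ld_dom_const _ _ Hd)). rewrite (ld_const _ _ Hd). ring.
Qed.

Lemma lderiv_lpow m : LSeq (dl (lpow q (S m))) (lmul (lconst (fconst (INR (S m)))) (lmul (lpow q m) (dl q))).
Proof.
  induction m.
  - change (lpow q 1) with (lmul (lconst (fconst 1)) q). change (INR 1) with 1.
    rewrite lderiv_lmul_lconst by auto. change (lpow q 0) with lone. rewrite lconst_one. ring.
  - change (lpow q (S (S m))) with (lmul (lpow q (S m)) q).
    rewrite (ld_mul _ _ Hd) by (auto; apply dom_lpow). rewrite IHm.
    change (lpow q (S m)) with (lmul (lpow q m) q).
    transitivity (lmul (ladd (lconst (fconst (INR (S m)))) lone) (lmul (lmul (lpow q m) q) (dl q))); [ring|].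
    rewrite <- lconst_one, ladd_lconst. apply lmul_mor; [|reflexivity].
    apply lconst_ext. intros. unfold fadd, fconst. rewrite (S_INR (S m)). ring.
Qed.

Fixpoint dlog1p_trunc (M : nat) : LS :=
  match M with O => lzero | S M' => ladd (dlog1p_trunc M') (lmul (lsign M') (lmul (lpow q M') (dl q))) end.

Lemma lderiv_log1p_trunc M : LSeq (dl (log1p_trunc q M)) (dlog1p_trunc M).
Proof.
  induction M; cbn [log1p_trunc dlog1p_trunc].
  - apply (ld_const _ _ Hd 0).
  - rewrite (ld_add _ _ Hd) by (apply dom_log1p_trunc || (apply (ld_dom_mul _ _ Hd); [apply (ld_dom_const _ _ Hd)|apply dom_lpow])).
    rewrite IHM. apply ladd_mor; [reflexivity|].
    rewrite lderiv_lmul_lconst by apply dom_lpow. rewrite lderiv_lpow.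
    transitivity (lmul (lmul (lconst (fconst (log_coef (S M)))) (lconst (fconst (INR (S M))))) (lmul (lpow q M) (dl q))); [ring|].
    rewrite lmul_lconst. apply lmul_mor; [|reflexivity].
    apply lconst_ext. intros. unfold fmul, fconst, log_coef.
    replace ((-1) ^ S (S M)) with ((-1) ^ M) by (simpl; ring). field. apply not_0_INR. lia.
Qed.

Lemma dlog1p_trunc_telescope M : LSeq (lmul (ladd lone q) (dlog1p_trunc M)) (lsub (dl q) (lmul (lsign M) (lmul (lpow q M) (dl q)))).
Proof.
  induction M; cbn [dlog1p_trunc].
  - change (lpow q 0) with lone. rewrite lsign_0. ring.
  - transitivity (ladd (lmul (ladd lone q) (dlog1p_trunc M)) (lmul (ladd lone q) (lmul (lsign M) (lmul (lpow q M) (dl q))))); [ring|].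
    rewrite IHM, lsign_S. change (lpow q (S M)) with (lmul (lpow q M) q). ring.
Qed.
End LogDerivative.

Lemma coef_log1p_trunc q M j s t :
  coef (log1p_trunc q M) j s t = fold_right Rplus 0 (map (fun m => log_coef m * coef (lpow q m) j s t) (seq 1 M)).
Proof.
  induction M; cbn [log1p_trunc].
  - apply coef_lzero.
  - rewrite coef_ladd, IHM, coef_lmul_lconst, seq_S, map_app, fold_Rplus_app. simpl. unfold fconst. ring.
Qed.

Lemma fold_zero_ext (F : nat -> R) l : (forall m, In m l -> F m = 0) -> fold_right Rplus 0 (map F l) = 0.
Proof. induction l; simpl; intros H. reflexivity. rewrite H, IHl; auto. ring. Qed.

Lemma ldeg_qser N p : ldeg (qser N p) = (-1)%Z. Proof. reflexivity. Qed.

Lemma coef_log1q_trunc N p M j s t : (- j <= Z.of_nat M)%Z ->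
  coef (log1q N p) j s t = coef (log1p_trunc (qser N p) M) j s t.
Proof.
  intros HM. rewrite coef_log1p_trunc.
  assert (Hz : forall m, (- j < Z.of_nat m)%Z -> coef (lpow (qser N p) m) j s t = 0).
  { intros m Hm. apply coef_above. rewrite ldeg_lpow, ldeg_qser. lia. }
  destruct (Z_le_gt_dec j (-1)) as [Hj|Hj].
  - rewrite coef_below by (simpl; lia). simpl lco. unfold sumN.
    replace (S (Z.to_nat (- j)) - 1)%nat with (Z.to_nat (- j)) by lia.
    replace M with (Z.to_nat (- j) + (M - Z.to_nat (- j)))%nat by lia.
    rewrite seq_app, map_app, fold_Rplus_app.
    rewrite (fold_zero_ext _ (seq (1 + Z.to_nat (- j)) _)).
    + rewrite Rplus_0_r. reflexivity.
    + intros m Hm. apply in_seq in Hm. rewrite Hz by lia. ring.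
  - rewrite coef_above by (simpl; lia). symmetry. apply fold_zero_ext.
    intros m Hm. apply in_seq in Hm. rewrite Hz by lia. ring.
Qed.

(* Truncated at an order [M > -j], the series telescopes:
   [(1 + q) dl (sum_(m <= M) ...) = dl q - (-q)^M dl q], and [(-q)^M dl q]
   has degree [< j]. *)
Lemma lderiv_log1q dl G (Hd : lderivation dl G) N p : G (qser N p) ->
  LSeq (lmul (ladd lone (qser N p)) (dl (log1q N p))) (dl (qser N p)).
Proof.
  intros Gq j s t. set (q := qser N p).
  set (M := (Z.to_nat (- j) + 1)%nat).
  set (Q := ladd lone q).
  transitivity (coef (lmul Q (dl (log1p_trunc q M))) j s t).
  - rewrite (coef_lmul Q _ j s t (j - Z.max (ldeg (dl (log1q N p))) (ldeg (dl (log1p_trunc q M)))) 0) by (simpl; lia).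
    rewrite (coef_lmul Q _ j s t (j - Z.max (ldeg (dl (log1q N p))) (ldeg (dl (log1p_trunc q M)))) 0) by (simpl; lia).
    apply zsum_ext. intros i Hi. f_equal. apply (ld_local _ _ Hd).
    intros i' s' t' Hi'. apply coef_log1q_trunc. lia.
  - rewrite (lderiv_log1p_trunc dl G Hd q Gq M), (dlog1p_trunc_telescope dl q M).
    rewrite coef_lsub. unfold lsign. rewrite coef_lmul_lconst.
    rewrite (coef_above (lmul (lpow q M) (dl q))). ring.
    simpl ldeg. rewrite ldeg_lpow. pose proof (ld_deg _ _ Hd q). unfold q in *. rewrite ldeg_qser in *. lia.
Qed.

Lemma lderivation_lmap_dderiv d : lderivation (lmap (dderiv d)) (ex_dd_LS d).
Proof.
  constructor.
  - intros f g H. apply lmap_mor_Proper. auto.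
  - apply lmap_dderiv_ladd.
  - apply lmap_dderiv_lmul.
  - intros c. rewrite lmap_dderiv_lconst. apply lconst_ext. intros. unfold fconst. apply dderiv_const.
  - intros f g j H s t. rewrite !coef_lmapd. apply dderiv_ext. intros. apply H. lia.
  - intros f. simpl. lia.
  - apply ex_dd_LS_ladd.
  - apply ex_dd_LS_lmul.
  - intros c. apply ex_dd_LS_lconst. intros s t. apply ex_dd_const.
Qed.

Lemma lderivation_ldk : lderivation ldk (fun _ => True).
Proof.
  constructor; auto.
  - intros f g H. apply ldk_mor_Proper. auto.
  - intros. apply ldk_ladd.
  - intros. apply ldk_lmul.
  - intros c. apply ldk_lconst.
  - intros f g j H s t. rewrite !coef_ldk. rewrite H by lia. reflexivity.
  - intros f. simpl. lia.
Qed.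

Lemma coef_lmul_lmono k c g j s t : coef (lmul (lmono k c) g) j s t = c s t * coef g (j - k) s t.
Proof.
  rewrite (coef_lmul _ _ j s t (Z.min k (j - ldeg g)) (Z.max k (ldeg (lmono k c)))) by lia.
  rewrite (zsum_delta _ _ k); try lia.
  - rewrite coef_lmono. rewrite Z.eqb_refl. reflexivity.
  - intros i Hi. rewrite coef_lmono. replace (i =? k)%Z with false by (symmetry; apply Z.eqb_neq; lia). ring.
Qed.
Lemma lmono_ext k a b : (forall s t, a s t = b s t) -> LSeq (lmono k a) (lmono k b).
Proof. intros H j s t. rewrite !coef_lmono. destruct (j =? k)%Z; auto. Qed.
Lemma lmul_lmono k k' c c' : LSeq (lmul (lmono k c) (lmono k' c')) (lmono (k + k') (fmul c c')).
Proof.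
  intros j s t. rewrite coef_lmul_lmono, !coef_lmono.
  destruct (Z.eqb_spec (j - k) k'); destruct (Z.eqb_spec j (k + k')); try lia; unfold fmul; ring.
Qed.
Lemma lmul_lmono_lconst k c e : LSeq (lmul (lmono k c) (lconst e)) (lmono k (fmul c e)).
Proof.
  intros j s t. rewrite coef_lmul_lmono, coef_lconst, coef_lmono.
  destruct (Z.eqb_spec (j - k) 0); destruct (Z.eqb_spec j k); try lia; unfold fmul; ring.
Qed.

Definition lead_nonzero (p : nat -> CF) := forall s t, p 0%nat s t <> 0.

Lemma polyLS_factor N p : lead_nonzero p ->
  LSeq (polyLS N p) (lmul (lmono (Z.of_nat N) (p 0%nat)) (ladd lone (qser N p))).
Proof.
  intros Hp j s t. rewrite coef_lmul_lmono, coef_ladd, coef_lone.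
  destruct (Z_le_gt_dec j (Z.of_nat N)) as [Hj|Hj].
  - rewrite coef_below by (simpl; lia). simpl lco.
    destruct (Z.eqb_spec j (Z.of_nat N)) as [E|E].
    + subst. rewrite Z.sub_diag. simpl. rewrite (coef_above (qser N p)) by (simpl; lia).
      replace (Z.to_nat (Z.of_nat N - Z.of_nat N)) with 0%nat by lia.
      destruct (0 <=? Z.of_nat N)%Z eqn:E; [|apply Z.leb_gt in E; lia]. ring.
    + replace (j - Z.of_nat N =? 0)%Z with false by (symmetry; apply Z.eqb_neq; lia).
      rewrite coef_below by (simpl; lia). simpl lco.
      destruct (Z.leb_spec 0 j).
      * replace ((j - Z.of_nat N <? 0)%Z && (- (j - Z.of_nat N) <=? Z.of_nat N)%Z)%bool with true
          by (symmetry; apply andb_true_intro; split; [apply Z.ltb_lt|apply Z.leb_le]; lia).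
        unfold fdiv. replace (Z.to_nat (- (j - Z.of_nat N))) with (Z.to_nat (Z.of_nat N - j)) by lia.
        field. apply Hp.
      * replace ((j - Z.of_nat N <? 0)%Z && (- (j - Z.of_nat N) <=? Z.of_nat N)%Z)%bool with false
          by (symmetry; apply Bool.andb_false_iff; right; apply Z.leb_gt; lia).
        unfold fzero. ring.
  - rewrite coef_above by (simpl; lia).
    replace (j - Z.of_nat N =? 0)%Z with false by (symmetry; apply Z.eqb_neq; lia).
    rewrite (coef_above (qser N p)) by (simpl; lia). ring.
Qed.

Lemma lmul_cancel_l P X Y : (forall s t, coef P (ldeg P) s t <> 0) ->
  LSeq (lmul P X) (lmul P Y) -> LSeq X Y.
Proof.
  intros HP H.
  set (Z := lsub X Y).
  assert (HZ : LSeq (lmul P Z) lzero) by (unfold Z; transitivity (lsub (lmul P X) (lmul P Y)); [ring|rewrite H; ring]).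
  assert (Hn : forall n j s t, (ldeg Z - j < Z.of_nat n)%Z -> coef Z j s t = 0).
  { induction n; intros j s t Hj.
    - apply coef_above. lia.
    - destruct (Z_le_gt_dec j (ldeg Z)); [|apply coef_above; lia].
      pose proof (HZ (ldeg P + j)%Z s t) as E. rewrite coef_lzero in E.
      rewrite (coef_lmul P Z _ s t (ldeg P + j - ldeg Z) (ldeg P)) in E by lia.
      rewrite zsum_last in E by lia.
      rewrite zsum_zero in E.
      + replace (ldeg P + j - ldeg P)%Z with j in E by lia.
        rewrite Rplus_0_l in E. apply Rmult_integral in E. destruct E; auto. exfalso; eapply HP; eauto.
      + intros i Hi. rewrite IHn by lia. ring. }
  intros j s t. assert (E : coef Z j s t = 0) by (apply (Hn (Z.to_nat (ldeg Z - j + 1))); lia).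
  unfold Z in E. rewrite coef_lsub in E. lra.
Qed.

Definition ex_dd_poly (d : dir) (N : nat) (p : nat -> CF) := forall i, (i <= N)%nat -> ex_dd_fun d (p i).

Lemma ex_dd_LS_qser d N p : lead_nonzero p -> ex_dd_poly d N p -> ex_dd_LS d (qser N p).
Proof.
  intros Hp Hg j s t. unfold coef. simpl.
  destruct (j <=? -1)%Z; [|apply ex_dd_const].
  destruct ((j <? 0)%Z && (- j <=? Z.of_nat N)%Z)%bool eqn:E; [|apply ex_dd_const].
  apply andb_prop in E. destruct E as [E1 E2]. apply Z.leb_le in E2.
  apply ex_dd_div; [apply Hg; lia|apply Hg; lia|apply Hp].
Qed.

Lemma ex_dd_LS_polyLS d N p : ex_dd_poly d N p -> ex_dd_LS d (polyLS N p).
Proof.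
  intros Hg j s t. unfold coef. simpl.
  destruct (j <=? Z.of_nat N)%Z eqn:E1; [|apply ex_dd_const].
  destruct (0 <=? j)%Z eqn:E2; [|apply ex_dd_const]. apply Z.leb_le in E1. apply Z.leb_le in E2. apply Hg. lia.
Qed.

Lemma lmap_dderiv_lone d : LSeq (lmap (dderiv d) lone) lzero.
Proof. unfold lone. rewrite lmap_dderiv_lconst. apply lconst_ext. intros. unfold fone, fzero. apply dderiv_const. Qed.

Lemma polyLS_logD d N p : lead_nonzero p -> ex_dd_poly d N p ->
  LSeq (lmul (polyLS N p) (logD N p (dderiv d))) (lmap (dderiv d) (polyLS N p)).
Proof.
  intros Hp Hg.
  assert (G0 : ex_dd_fun d (p 0%nat)) by (apply Hg; lia).
  assert (Gq : ex_dd_LS d (qser N p)) by (apply ex_dd_LS_qser; auto).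
  rewrite (polyLS_factor N p Hp).
  pose proof (ex_dd_LS_lmono d (Z.of_nat N) _ G0) as Gm.
  pose proof (ex_dd_LS_ladd d _ _ (ex_dd_LS_lone d) Gq) as GQ.
  rewrite (lmap_dderiv_lmul d _ _ Gm GQ).
  rewrite (lmap_dderiv_ladd d _ _ (ex_dd_LS_lone d) Gq). rewrite lmap_dderiv_lone, lmap_dderiv_lmono.
  unfold logD.
  set (mono := lmono (Z.of_nat N) (p 0%nat)). set (Q := ladd lone (qser N p)).
  transitivity (ladd (lmul (lmul mono (lconst (dderiv d (logp0 p)))) Q)
                     (lmul mono (lmul Q (lmap (dderiv d) (log1q N p))))); [ring|].
  unfold Q, mono. rewrite (lderiv_log1q _ _ (lderivation_lmap_dderiv d) N p Gq).
  rewrite lmul_lmono_lconst.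
  rewrite (lmono_ext _ (fmul (p 0%nat) (dderiv d (logp0 p))) (dderiv d (p 0%nat))).
  ring.
  intros s t. unfold fmul, logp0. rewrite dderiv_ln_abs by (auto; apply G0). field. apply Hp.
Qed.

Lemma polyLS_logDk N p : lead_nonzero p -> LSeq (lmul (polyLS N p) (logDk N p)) (ldk (polyLS N p)).
Proof.
  intros Hp.
  rewrite (polyLS_factor N p Hp).
  rewrite ldk_lmul, ldk_ladd. unfold lone. rewrite ldk_lconst. fold lone. rewrite ldk_lmono.
  unfold logDk.
  set (mono := lmono (Z.of_nat N) (p 0%nat)). set (Q := ladd lone (qser N p)).
  transitivity (ladd (lmul (lmul mono (lmono (-1) (fconst (INR N)))) Q)
                     (lmul mono (lmul Q (ldk (log1q N p))))); [ring|].
  unfold Q, mono. rewrite (lderiv_log1q _ _ lderivation_ldk N p I).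
  rewrite lmul_lmono.
  replace (Z.of_nat N + -1)%Z with (Z.of_nat N - 1)%Z by lia.
  rewrite (lmono_ext _ (fmul (p 0%nat) (fconst (INR N))) (fscal (IZR (Z.of_nat N)) (p 0%nat))).
  ring.
  intros s t. unfold fmul, fscal, fconst. rewrite <- INR_IZR_INZ. ring.
Qed.

(** * Symmetry of mixed partial derivatives *)

Lemma dir_eq_dec (d1 d2 : dir) : {d1 = d2} + {d1 <> d2}.
Proof. decide equality. apply Nat.eq_dec. Qed.

Definition move_s (d : dir) (y s : R) : R := match d with Ds => y | Dc _ => s end.
Definition move_t (d : dir) (y : R) (t : nat -> R) : nat -> R := match d with Ds => t | Dc i => upd t i y end.

Lemma apply_dir_move d y f s t : apply_dir d y f s t = f (move_s d y s) (move_t d y t).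
Proof. destruct d; reflexivity. Qed.
Lemma coord_move d y s t : coord d (move_s d y s) (move_t d y t) = y.
Proof. destruct d; simpl. reflexivity. unfold upd. rewrite Nat.eqb_refl. reflexivity. Qed.
Lemma move_s_idem d y y' s : move_s d y (move_s d y' s) = move_s d y s. Proof. destruct d; reflexivity. Qed.
Lemma move_t_idem d y y' t : move_t d y (move_t d y' t) = move_t d y t.
Proof. destruct d; simpl; auto. extensionality j. unfold upd. destruct (j =? i); reflexivity. Qed.
Lemma move_s_comm d1 d2 y1 y2 s : d1 <> d2 -> move_s d1 y1 (move_s d2 y2 s) = move_s d2 y2 (move_s d1 y1 s).
Proof. intros H. destruct d1, d2; simpl; auto. congruence. Qed.
Lemma move_t_comm d1 d2 y1 y2 t : d1 <> d2 -> move_t d1 y1 (move_t d2 y2 t) = move_t d2 y2 (move_t d1 y1 t).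
Proof.
  intros H. destruct d1, d2; simpl; auto.
  extensionality j. unfold upd. destruct (Nat.eqb_spec j i); destruct (Nat.eqb_spec j i0); subst; auto.
  congruence.
Qed.
Lemma move_s_coord d s t : move_s d (coord d s t) s = s. Proof. destruct d; reflexivity. Qed.
Lemma move_t_coord d s t : move_t d (coord d s t) t = t.
Proof. destruct d; simpl; auto. extensionality j. unfold upd. destruct (Nat.eqb_spec j i); subst; auto. Qed.

Lemma dderiv_move d g s t : dderiv d g s t = Derive (fun y => g (move_s d y s) (move_t d y t)) (coord d s t).
Proof. unfold dderiv. f_equal. extensionality y. apply apply_dir_move. Qed.

Lemma continuity_2d_pt_of_continuous (G : R * R -> R) x y : continuous G (x, y) -> continuity_2d_pt (fun u v => G (u, v)) x y.
Proof.
  intros H eps. apply locally_2d_locally.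
  specialize (H _ (locally_ball (G (x, y)) eps)). simpl in H.
  eapply filter_imp; [|exact H]. intros [u v] Hb. simpl. exact Hb.
Qed.

Lemma continuity_2d_pt_of_continuous_swap (G : R * R -> R) x y : continuous G (y, x) -> continuity_2d_pt (fun u v => G (v, u)) x y.
Proof.
  intros H eps. pose proof (continuity_2d_pt_of_continuous G y x H eps) as [delta Hd].
  exists delta. intros u v Hu Hv. apply Hd; auto.
Qed.

Lemma smooth_ex_derive f d l s t : smooth f -> ex_derive (fun y => apply_dir d y (iterd l f) s t) (coord d s t).
Proof. intros H. apply (proj1 (H l)). Qed.

Lemma smooth_ex_derive_move f d l s t y : smooth f ->
  ex_derive (fun w => iterd l f (move_s d w s) (move_t d w t)) y.
Proof.
  intros Hf. pose proof (smooth_ex_derive f d l (move_s d y s) (move_t d y t) Hf) as H.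
  rewrite coord_move in H. eapply ex_derive_ext; [|exact H].
  intros w. simpl. rewrite apply_dir_move, move_s_idem, move_t_idem. reflexivity.
Qed.

Section MixedPartials.
Variables (phi : CF) (d1 d2 : dir) (s : R) (t : nat -> R).
Hypothesis d1_neq_d2 : d1 <> d2.

Let ms u v := move_s d1 u (move_s d2 v s).
Let mt u v := move_t d1 u (move_t d2 v t).
Let F u v := phi (ms u v) (mt u v).

Lemma move_comm_at (g : CF) u v : g (ms u v) (mt u v) = g (move_s d2 v (move_s d1 u s)) (move_t d2 v (move_t d1 u t)).
Proof. unfold ms, mt. rewrite (move_s_comm d1 d2), (move_t_comm d1 d2) by auto. reflexivity. Qed.

Lemma dderiv2_slice u v : dderiv d2 phi (ms u v) (mt u v) = Derive (fun w => F u w) v.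
Proof.
  rewrite move_comm_at, dderiv_move, coord_move. f_equal. extensionality w.
  rewrite move_s_idem, move_t_idem. unfold F. rewrite move_comm_at. reflexivity.
Qed.

Lemma dderiv1_slice u v : dderiv d1 phi (ms u v) (mt u v) = Derive (fun w => F w v) u.
Proof.
  unfold ms, mt. rewrite dderiv_move, coord_move. f_equal. extensionality w.
  rewrite move_s_idem, move_t_idem. reflexivity.
Qed.

Lemma dderiv12_slice u v :
  dderiv d1 (dderiv d2 phi) (ms u v) (mt u v) = Derive (fun z => Derive (fun w => F z w) v) u.
Proof.
  unfold ms at 1, mt at 1. rewrite dderiv_move, coord_move. f_equal. extensionality z.
  rewrite move_s_idem, move_t_idem. apply dderiv2_slice.
Qed.

Lemma dderiv21_slice u v :
  dderiv d2 (dderiv d1 phi) (ms u v) (mt u v) = Derive (fun z => Derive (fun w => F w z) u) v.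
Proof.
  rewrite move_comm_at, dderiv_move, coord_move. f_equal. extensionality z.
  rewrite move_s_idem, move_t_idem, <- move_comm_at. apply dderiv1_slice.
Qed.

Hypothesis phi_smooth : smooth phi.

Lemma ex_derive_slices u v :
  ex_derive (fun w => F w v) u /\ ex_derive (fun w => F u w) v /\
  ex_derive (fun z => Derive (fun w => F z w) v) u /\ ex_derive (fun z => Derive (fun w => F w z) u) v.
Proof.
  repeat split.
  - exact (smooth_ex_derive_move phi d1 [] _ _ u phi_smooth).
  - eapply ex_derive_ext; [|exact (smooth_ex_derive_move phi d2 [] (move_s d1 u s) (move_t d1 u t) v phi_smooth)].
    intros w. symmetry. apply move_comm_at.
  - eapply ex_derive_ext; [|exact (smooth_ex_derive_move phi d1 [d2] (move_s d2 v s) (move_t d2 v t) u phi_smooth)].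
    intros z. apply dderiv2_slice.
  - eapply ex_derive_ext; [|exact (smooth_ex_derive_move phi d2 [d1] (move_s d1 u s) (move_t d1 u t) v phi_smooth)].
    intros z. cbv beta. change (iterd [d1] phi) with (dderiv d1 phi).
    rewrite <- (move_comm_at (dderiv d1 phi)). apply dderiv1_slice.
Qed.

Lemma dderiv_comm_neq : dderiv d1 (dderiv d2 phi) s t = dderiv d2 (dderiv d1 phi) s t.
Proof.
  set (c1 := coord d1 s t). set (c2 := coord d2 s t).
  assert (Es : s = ms c1 c2) by (unfold ms, c1, c2; rewrite !move_s_coord; reflexivity).
  assert (Et : t = mt c1 c2) by (unfold mt, c1, c2; rewrite !move_t_coord; reflexivity).
  rewrite Es, Et at 1. rewrite dderiv12_slice. rewrite Es, Et. rewrite dderiv21_slice.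
  apply Schwarz.
  - apply locally_2d_forall. apply ex_derive_slices.
  - pose proof (proj2 (phi_smooth [d1; d2]) d1 d2 s t) as H.
    apply continuity_2d_pt_of_continuous in H. eapply continuity_2d_pt_ext; [|exact H].
    intros u v. unfold slice2. simpl. rewrite !apply_dir_move. apply dderiv12_slice.
  - pose proof (proj2 (phi_smooth [d2; d1]) d2 d1 s t) as H.
    apply continuity_2d_pt_of_continuous_swap in H. eapply continuity_2d_pt_ext; [|exact H].
    intros u v. unfold slice2. simpl. rewrite !apply_dir_move, <- move_comm_at. apply dderiv21_slice.
Qed.
End MixedPartials.

Lemma smooth_dderiv_comm phi d1 d2 s t : smooth phi ->
  dderiv d1 (dderiv d2 phi) s t = dderiv d2 (dderiv d1 phi) s t.
Proof.
  intros Hs. destruct (dir_eq_dec d1 d2) as [-> | Hne]; [reflexivity |].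
  apply dderiv_comm_neq; auto.
Qed.

(** * The gauge transformation *)

Notation d0 := (Dc 0).

Lemma bracket_lsub_l f1 f2 g : ex_dd_LS d0 f1 -> ex_dd_LS d0 f2 ->
  LSeq (bracket (lsub f1 f2) g) (lsub (bracket f1 g) (bracket f2 g)).
Proof.
  intros H1 H2. unfold bracket. change dx with (dderiv d0).
  rewrite ldk_lsub, (lmap_dderiv_lsub d0 f1 f2 H1 H2). ring.
Qed.

Lemma bracket_lconst_l c g : LSeq (bracket (lconst c) g) (lopp (lmul (lconst (dx c)) (ldk g))).
Proof.
  unfold bracket. change dx with (dderiv d0). rewrite ldk_lconst, lmap_dderiv_lconst. ring.
Qed.

Lemma bracket_lsubst f g a : ex_dd_LS d0 f -> ex_dd_LS d0 g -> ex_dd_fun d0 a ->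
  LSeq (bracket (lsubst f a) (lsubst g a)) (lsubst (bracket f g) a).
Proof.
  intros Hf Hg Ha. unfold bracket. change dx with (dderiv d0).
  rewrite !lmap_dderiv_lsubst by auto. rewrite !ldk_lsubst.
  rewrite lsubst_lsub, !lsubst_lmul. ring.
Qed.

Lemma bracket_log_lsub_r N p g1 g2 : ex_dd_LS d0 g1 -> ex_dd_LS d0 g2 ->
  LSeq (bracket_log N p (lsub g1 g2)) (lsub (bracket_log N p g1) (bracket_log N p g2)).
Proof.
  intros H1 H2. unfold bracket_log. change dx with (dderiv d0).
  rewrite ldk_lsub, (lmap_dderiv_lsub d0 g1 g2 H1 H2). ring.
Qed.

Lemma bracket_log_lconst_r N p c : LSeq (bracket_log N p (lconst c)) (lmul (logDk N p) (lconst (dx c))).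
Proof.
  unfold bracket_log. change dx with (dderiv d0). rewrite ldk_lconst, lmap_dderiv_lconst. ring.
Qed.

Add Parametric Morphism N p : (bracket_log N p) with signature LSeq ==> LSeq as bracket_log_mor.
Proof. intros g g' H. unfold bracket_log. change dx with (dderiv d0). rewrite H. reflexivity. Qed.

Section DressedPolynomial.
Variables (N : nat) (p : nat -> CF) (phi : CF).
Notation a := (dx phi).
Notation E := (fun s t => exp (ds phi s t)).
Notation pt := (ptilde N p phi).

Lemma coef_polyLS_neg j s t : (j < 0)%Z -> coef (polyLS N p) j s t = 0.
Proof.
  intros H. destruct (Z_le_gt_dec j (Z.of_nat N)).
  - rewrite coef_below by (simpl; lia). simpl. replace (0 <=? j)%Z with false by (symmetry; apply Z.leb_gt; lia). reflexivity.
  - apply coef_above. simpl. lia.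
Qed.

Lemma coef_lsubst_polyLS_neg j s t : (j < 0)%Z -> coef (lsubst (polyLS N p) a) j s t = 0.
Proof.
  intros H. rewrite (coef_lsubst _ _ j s t (Z.of_nat N)) by (simpl; lia).
  apply zsum_zero. intros k Hk. destruct (Z_lt_le_dec k 0).
  - rewrite coef_polyLS_neg by auto. ring.
  - rewrite binomR_nat_lt by lia. ring.
Qed.

Lemma polyLS_ptilde : LSeq (polyLS N pt) (lmul (lconst E) (lsubst (polyLS N p) a)).
Proof.
  intros j s t. rewrite coef_lmul_lconst.
  destruct (Z_le_gt_dec j (Z.of_nat N)).
  - rewrite coef_below by (simpl; lia). simpl lco.
    destruct (Z.leb_spec 0 j).
    + unfold ptilde, fmul. replace (Z.of_nat N - Z.of_nat (Z.to_nat (Z.of_nat N - j)))%Z with j by lia. reflexivity.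
    + rewrite coef_lsubst_polyLS_neg by lia. unfold fzero. ring.
  - rewrite !coef_above by (simpl; lia). ring.
Qed.

Lemma ptilde_0 s t : pt 0%nat s t = exp (ds phi s t) * p 0%nat s t.
Proof.
  unfold ptilde, fmul. f_equal. rewrite Z.sub_0_r.
  rewrite (coef_lsubst _ _ _ s t (Z.of_nat N)) by (simpl; lia). rewrite zsum_single.
  rewrite Z.sub_diag. simpl. rewrite coef_below by (simpl; lia). simpl.
  replace (0 <=? Z.of_nat N)%Z with true by (symmetry; apply Z.leb_le; lia).
  rewrite Z.sub_diag. simpl. rewrite binomR_0. ring.
Qed.

Lemma lead_nonzero_ptilde : lead_nonzero p -> lead_nonzero pt.
Proof. intros H s t. rewrite ptilde_0. apply Rmult_integral_contrapositive. split. apply Rgt_not_eq, exp_pos. apply H. Qed.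

Lemma polyLS_ptilde_lead_neq0 : lead_nonzero p -> forall s t, coef (polyLS N pt) (ldeg (polyLS N pt)) s t <> 0.
Proof.
  intros H s t. simpl ldeg. rewrite coef_below by (simpl; lia). simpl.
  replace (0 <=? Z.of_nat N)%Z with true by (symmetry; apply Z.leb_le; lia).
  rewrite Z.sub_diag. apply lead_nonzero_ptilde; auto.
Qed.

Lemma ex_dd_poly_ptilde d : ex_dd_poly d N p -> ex_dd_fun d a -> ex_dd_fun d (ds phi) -> ex_dd_poly d N pt.
Proof.
  intros Hp Ha Hs i Hi s t. unfold ptilde, fmul. apply ex_dd_mult.
  - apply ex_dd_exp. apply Hs.
  - apply ex_dd_LS_lsubst; auto. apply ex_dd_LS_polyLS; auto.
Qed.

Lemma logDk_ptilde : lead_nonzero p -> LSeq (logDk N pt) (lsubst (logDk N p) a).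
Proof.
  intros Hp. apply (lmul_cancel_l (polyLS N pt)). apply polyLS_ptilde_lead_neq0; auto.
  rewrite polyLS_logDk by (apply lead_nonzero_ptilde; auto).
  rewrite polyLS_ptilde. rewrite ldk_lmul, ldk_lconst, ldk_lsubst, <- polyLS_logDk by auto. rewrite lsubst_lmul. ring.
Qed.

Lemma logD_ptilde d : lead_nonzero p -> ex_dd_poly d N p -> ex_dd_fun d a -> ex_dd_fun d (ds phi) ->
  LSeq (logD N pt (dderiv d))
    (ladd (lconst (dderiv d (ds phi)))
      (ladd (lsubst (logD N p (dderiv d)) a) (lmul (lconst (fopp (dderiv d a))) (lsubst (logDk N p) a)))).
Proof.
  intros Hp Hg Ha Hs. apply (lmul_cancel_l (polyLS N pt)). apply polyLS_ptilde_lead_neq0; auto.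
  rewrite polyLS_logD by (try apply lead_nonzero_ptilde; try apply ex_dd_poly_ptilde; auto).
  rewrite polyLS_ptilde.
  assert (GE : ex_dd_LS d (lconst E)) by (apply ex_dd_LS_lconst; intros s t; apply ex_dd_exp, Hs).
  assert (GT : ex_dd_LS d (lsubst (polyLS N p) a)) by (apply ex_dd_LS_lsubst; auto; apply ex_dd_LS_polyLS; auto).
  rewrite (lmap_dderiv_lmul d _ _ GE GT). rewrite lmap_dderiv_lconst.
  rewrite lmap_dderiv_lsubst by (auto; apply ex_dd_LS_polyLS; auto).
  rewrite <- (polyLS_logD d N p Hp Hg), <- (polyLS_logDk N p Hp).
  rewrite !lsubst_lmul.
  rewrite (lconst_ext (dderiv d E) (fmul (dderiv d (ds phi)) E)).
  2:{ intros s t. unfold fmul. rewrite dderiv_exp by apply Hs. reflexivity. }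
  rewrite <- lmul_lconst. ring.
Qed.

Lemma bracket_log_ptilde g : lead_nonzero p -> ex_dd_poly d0 N p -> ex_dd_fun d0 a -> ex_dd_fun d0 (ds phi) -> ex_dd_LS d0 g ->
  LSeq (bracket_log N pt (lsubst g a))
       (ladd (lsubst (bracket_log N p g) a) (lmul (lconst (fopp (dx (ds phi)))) (lsubst (ldk g) a))).
Proof.
  intros Hp Hg Ha Hs Hgg. unfold bracket_log. change dx with (dderiv d0).
  rewrite logDk_ptilde by auto. rewrite logD_ptilde by auto.
  rewrite lmap_dderiv_lsubst by auto. rewrite ldk_lsubst.
  rewrite lsubst_lsub, !lsubst_lmul.
  change (dx phi) with (dderiv d0 phi).
  rewrite <- !lopp_lconst. ring.
Qed.
End DressedPolynomial.

Section GaugeFlows.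
Variables (N : nat) (u p : nat -> CF) (phi : CF).
Hypothesis u_smooth : forall n, smooth (u n).
Hypothesis p_smooth : forall i, (i <= N)%nat -> smooth (p i).
Hypothesis phi_smooth : smooth phi.
Hypothesis p_lead : lead_nonzero p.

Notation Lt := (lsubst (Lax u) (dx phi)).
Notation pt := (ptilde N p phi).

Lemma ex_dd_phi_x d : ex_dd_fun d (dx phi).
Proof. intros s t. exact (smooth_ex_derive phi d [Dc 0] s t phi_smooth). Qed.

Lemma ex_dd_phi_s d : ex_dd_fun d (ds phi).
Proof. intros s t. exact (smooth_ex_derive phi d [Ds] s t phi_smooth). Qed.

Lemma ex_dd_LS_Lax d : ex_dd_LS d (Lax u).
Proof.
  intros j s t. unfold coef. simpl. destruct (j <=? 1)%Z; [|apply ex_dd_const].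
  destruct (j =? 1)%Z; [apply ex_dd_const|]. exact (smooth_ex_derive (u _) d [] s t (u_smooth _)).
Qed.

Lemma ex_dd_poly_p d : ex_dd_poly d N p.
Proof. intros i Hi s t. exact (smooth_ex_derive (p i) d [] s t (p_smooth i Hi)). Qed.

#[local] Hint Resolve ex_dd_phi_x ex_dd_phi_s ex_dd_LS_Lax ex_dd_poly_p
  ex_dd_LS_lsubst ex_dd_LS_lconst ex_dd_LS_Bn : core.

Lemma lconst_dx_ds_phi :
  LSeq (lconst (fopp (dderiv Ds (dderiv d0 phi)))) (lconst (fopp (dderiv d0 (dderiv Ds phi)))).
Proof. apply lconst_ext. intros. unfold fopp. rewrite smooth_dderiv_comm by auto. reflexivity. Qed.

Lemma lax_sflow_gauge :
  LSeq (lmap ds (Lax u)) (bracket_log N p (Lax u)) -> LSeq (lmap ds Lt) (bracket_log N pt Lt).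
Proof.
  intros Hs. change ds with (dderiv Ds) in *.
  rewrite lmap_dderiv_lsubst, Hs, bracket_log_ptilde by auto.
  change dx with (dderiv d0). change ds with (dderiv Ds).
  rewrite lconst_dx_ds_phi. ring.
Qed.

Section TimeFlow.
Variable n : nat.
Hypothesis phi_tn : forall s t, dt n phi s t = - peval (Bn (Lax u) n) (fopp (dx phi)) s t.

Notation dn := (Dc (Nat.pred n)).
Notation cB := (peval (Bn (Lax u) n) (fopp (dx phi))).

Lemma ex_dd_cB d : ex_dd_fun d cB.
Proof.
  intros s t. apply (ex_dd_ext d (fun s t => - dt n phi s t)); [intros; rewrite phi_tn; ring |].
  apply ex_dd_opp. exact (smooth_ex_derive phi d [dn] s t phi_smooth).
Qed.

#[local] Hint Resolve ex_dd_cB : core.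

Lemma lconst_dx_cB : LSeq (lconst (dderiv d0 cB)) (lconst (fopp (dderiv dn (dderiv d0 phi)))).
Proof.
  apply lconst_ext. intros s t.
  rewrite (dderiv_ext _ _ (fun s t => - dt n phi s t)) by (intros; rewrite phi_tn; ring).
  unfold fopp.
  rewrite dderiv_opp, smooth_dderiv_comm by auto. reflexivity.
Qed.

Lemma lconst_ds_cB : LSeq (lconst (dderiv Ds cB)) (lopp (lconst (dderiv dn (dderiv Ds phi)))).
Proof.
  rewrite lopp_lconst. apply lconst_ext. intros s t.
  rewrite (dderiv_ext _ _ (fun s t => - dt n phi s t)) by (intros; rewrite phi_tn; ring).
  unfold fopp.
  rewrite dderiv_opp, smooth_dderiv_comm by auto. reflexivity.
Qed.

Lemma lax_tflow_gauge :
  LSeq (lmap (dt n) (Lax u)) (bracket (Bn (Lax u) n) (Lax u)) ->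
  LSeq (lmap (dt n) Lt) (bracket (Bn Lt n) Lt).
Proof.
  intros Ht. change (dt n) with (dderiv dn) in *.
  rewrite lmap_dderiv_lsubst, Ht, Bn_lsubst by auto.
  rewrite bracket_lsub_l, bracket_lsubst, bracket_lconst_l, ldk_lsubst by auto.
  change dx with (dderiv d0) in *. rewrite lconst_dx_cB. ring.
Qed.

Lemma log_tflow_gauge :
  LSeq (logD N p (dt n)) (lsub (lmap ds (Bn (Lax u) n)) (bracket_log N p (Bn (Lax u) n))) ->
  LSeq (logD N pt (dt n)) (lsub (lmap ds (Bn Lt n)) (bracket_log N pt (Bn Lt n))).
Proof.
  intros Ht. change (dt n) with (dderiv dn) in *. change ds with (dderiv Ds) in *.
  rewrite logD_ptilde, Ht, Bn_lsubst by auto.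
  rewrite lmap_dderiv_lsub, lmap_dderiv_lsubst, lmap_dderiv_lconst by auto.
  rewrite bracket_log_lsub_r, bracket_log_ptilde, bracket_log_lconst_r, logDk_ptilde, lsubst_lsub by auto.
  change dx with (dderiv d0). change ds with (dderiv Ds).
  rewrite lconst_dx_cB, lconst_ds_cB, lconst_dx_ds_phi. ring.
Qed.
End TimeFlow.
End GaugeFlows.

Theorem mainTheorem14 (N : nat) (u : nat -> CF) (p : nat -> CF) (phi : CF) :
  (1 <= N)%nat ->
  (forall n, smooth (u n)) ->
  (forall i, (i <= N)%nat -> smooth (p i)) ->
  smooth phi ->
  dcmKP N (Lax u) p ->
  (forall n, (1 <= n)%nat -> forall s t,
      dt n phi s t = - peval (Bn (Lax u) n) (fopp (dx phi)) s t) ->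
  is_expad phi (Lax u) (lsubst (Lax u) (dx phi)) /\
  dcmKP N (lsubst (Lax u) (dx phi)) (ptilde N p phi).
Proof.
  intros _ Hu Hp Hphi [Hp0 [Ht Hs]] Hphi_t.
  split; [apply is_expad_lsubst_Lax |].
  split; [apply lead_nonzero_ptilde; exact Hp0 |].
  split.
  - intros n Hn. destruct (Ht n Hn) as [HtL HtP]. split.
    + apply lax_tflow_gauge; auto.
    + apply log_tflow_gauge; auto.
  - apply lax_sflow_gauge; auto.
Qed.
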